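(* Let $T>0$, and let $q\in H^1([0,T],\mathbb R^{3N})\cap C^0$ be collision-free on $(0,T)$, solving the rotating-frame equations there for some $\omega_0$, and having an $\mathbf I$-cluster collision at $t=0$ for some $\mathbf I\subset\mathbf N$ with $|\mathbf I|\ge2$. Assume $q$ lies in a plane parallel to the $xy$-plane, i.e. each $z_i$ is constant on $[0,T]$. Let $\tau=(\tau_i)_{i\in\mathbf N}\in\{0,\pm1\}^N$ satisfy $\tau_{i_0}\ne\tau_{i_1}$ for some $i_0\neq i_1$ in $\mathbf I$, and $\tau_i=0$ for all $i\notin\mathbf I$. Then for every sufficiently small $\varepsilon>0$ there are $0<\delta_1<\delta_2$ (small, depending on $\varepsilon$) and $f\in H^1([0,T],\mathbb R)$ with $f=1$ on $[0,\delta_1]$, $f=0$ on $[\delta_2,T]$, and $f$ decreasing on $[\delta_1,\delta_2]$, with the following property. For every $\omega\in\mathbb R$, the path $q^\varepsilon_i(t)=q_i(t)+\varepsilon f(t)\tau_i\mathbf e_3$ ($i\in\mathbf N$, $\mathbf e_3=(0,0,1)$) satisfies $\mathcal A_\omega(q^\varepsilon;T)<\mathcal A_\omega(q;T)$.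
   Context: Fix $N\ge2$ and $\mathbf N=\{0,\dots,N-1\}$. Consider unit masses with positions $q_i=(x_i,y_i,z_i)=(\zeta_i,z_i)$, where $\zeta_i=x_i+\mathrm iy_i$. - Potential: $U(q)=\sum_{i<l}1/|q_i-q_l|$. - Rotating-frame action: $\mathcal A_\omega(q;T)=\int_0^T\big(\tfrac12\sum_i(|\dot\zeta_i+\mathrm i\omega\zeta_i|^2+\dot z_i^2)+U(q)\big)dt$. - Rotating-frame equations: $q$ solves them on an open interval if there it is $C^2$, collision-free, and $(e^{\mathrm i\omega t}\zeta_i,z_i)_i$ solves Newton's equations $\ddot q_i=-\sum_{l\ne i}(q_i-q_l)/|q_i-q_l|^3$. - Cluster collisions: $q$ has an $\mathbf I$-cluster collision at $t_0$ if all $q_i(t_0)$, $i\in\mathbf I$, coincide and differ from all $q_l(t_0)$, $l\notin\mathbf I$. *)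

From Stdlib Require Import Reals Lra.
Open Scope R_scope.

(* A configuration of N bodies is given by coordinate functions
   x i, y i, z i : R -> R for i < N  (zeta_i = x_i + i y_i). *)

Fixpoint sumN (n : nat) (g : nat -> R) : R :=
  match n with O => 0 | S m => sumN m g + g m end.

Definition dist3 (x y z : nat -> R -> R) (i l : nat) (t : R) : R :=
  sqrt ((x i t - x l t)^2 + (y i t - y l t)^2 + (z i t - z l t)^2).

Definition coincide (x y z : nat -> R -> R) (i l : nat) (t : R) : Prop :=
  x i t = x l t /\ y i t = y l t /\ z i t = z l t.

Definition collision_free (N : nat) (x y z : nat -> R -> R) (t : R) : Prop :=
  forall i l, (i < N)%nat -> (l < N)%nat -> i <> l -> ~ coincide x y z i l t.

Definition U (N : nat) (x y z : nat -> R -> R) (t : R) : R :=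
  sumN N (fun i => sumN i (fun l => 1 / dist3 x y z i l t)).

Definition cont_on (a b : R) (g : R -> R) : Prop :=
  forall t, a <= t <= b -> forall e, e > 0 -> exists d, d > 0 /\
    forall s, a <= s <= b -> Rabs (s - t) < d -> Rabs (g s - g t) < e.

Definition C2on (a b : R) (g : R -> R) : Prop :=
  exists g1 g2 : R -> R, forall t, a < t < b ->
    derivable_pt_lim g t (g1 t) /\ derivable_pt_lim g1 t (g2 t) /\ continuity_pt g2 t.

(* inertial-frame coordinates  (e^{i w t} zeta_i, z_i) *)
Definition rotX (w : R) (x y : nat -> R -> R) (i : nat) (t : R) : R :=
  cos (w * t) * x i t - sin (w * t) * y i t.
Definition rotY (w : R) (x y : nat -> R -> R) (i : nat) (t : R) : R :=
  sin (w * t) * x i t + cos (w * t) * y i t.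

Definition force (N : nat) (X Y Z : nat -> R -> R) (c : nat -> R -> R)
  (i : nat) (t : R) : R :=
  - sumN N (fun l => if Nat.eqb l i then 0
                     else (c i t - c l t) / (dist3 X Y Z i l t) ^ 3).

Definition solves_rot (N : nat) (w a b : R) (x y z : nat -> R -> R) : Prop :=
  (forall t, a < t < b -> collision_free N x y z t) /\
  forall i, (i < N)%nat ->
    C2on a b (x i) /\ C2on a b (y i) /\ C2on a b (z i) /\
    exists VX AX VY AY VZ AZ : R -> R, forall t, a < t < b ->
      derivable_pt_lim (rotX w x y i) t (VX t) /\ derivable_pt_lim VX t (AX t) /\
      derivable_pt_lim (rotY w x y i) t (VY t) /\ derivable_pt_lim VY t (AY t) /\
      derivable_pt_lim (z i) t (VZ t) /\ derivable_pt_lim VZ t (AZ t) /\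
      AX t = force N (rotX w x y) (rotY w x y) z (rotX w x y) i t /\
      AY t = force N (rotX w x y) (rotY w x y) z (rotY w x y) i t /\
      AZ t = force N (rotX w x y) (rotY w x y) z z i t.

Definition cluster_collision (N : nat) (I : nat -> Prop) (x y z : nat -> R -> R)
  (t0 : R) : Prop :=
  (forall i l, I i -> I l -> coincide x y z i l t0) /\
  (forall i l, I i -> (l < N)%nat -> ~ I l -> ~ coincide x y z i l t0).

(* Lower (Darboux-type) integral over [a,b] of a nonnegative, possibly
   +oo-valued, integrand g.  [Ge t c] means "c <= g t". *)
Definition lower_integral_is (a b : R) (Ge : R -> R -> Prop) (v : R) : Prop :=
  is_lub (fun r => exists phi : StepFun a b,
            (forall t, a < t < b -> Ge t (phi t)) /\ r = RiemannInt_SF phi) v.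

(* "c <= L_w(q)(t)": the rotating-frame Lagrangian
   1/2 sum_i (|zeta_i' + i w zeta_i|^2 + z_i'^2) + U(q), equal to +oo at
   collisions (no constraint); where q is not differentiable (finitely many
   points in our use) no constraint is imposed either. *)
Definition Lag_ge (N : nat) (w : R) (x y z : nat -> R -> R) (t c : R) : Prop :=
  ~ collision_free N x y z t \/
  forall dx dy dz : nat -> R,
    (forall i, (i < N)%nat -> derivable_pt_lim (x i) t (dx i) /\
        derivable_pt_lim (y i) t (dy i) /\ derivable_pt_lim (z i) t (dz i)) ->
    c <= / 2 * sumN N (fun i => (dx i - w * y i t)^2 + (dy i + w * x i t)^2 + (dz i)^2)
         + U N x y z t.

Definition action_is (N : nat) (w T : R) (x y z : nat -> R -> R) (v : R) : Prop :=
  lower_integral_is 0 T (Lag_ge N w x y z) v.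

(* A_w(q1;T) < A_w(q2;T) in [0,+oo]: A_w(q1;T) is finite and, if A_w(q2;T)
   is finite, strictly smaller. *)
Definition action_lt (N : nat) (w T : R) (x1 y1 z1 x2 y2 z2 : nat -> R -> R) : Prop :=
  exists a, action_is N w T x1 y1 z1 a /\
    forall b, action_is N w T x2 y2 z2 b -> a < b.

(* q in H^1([0,T]) : continuous on [0,T] and the kinetic energy
   int_0^T |q'|^2 is finite. *)
Definition H1_path (N : nat) (T : R) (x y z : nat -> R -> R) : Prop :=
  (forall i, (i < N)%nat -> cont_on 0 T (x i) /\ cont_on 0 T (y i) /\ cont_on 0 T (z i)) /\
  exists v, lower_integral_is 0 T (fun t c =>
    forall dx dy dz : nat -> R,
    (forall i, (i < N)%nat -> derivable_pt_lim (x i) t (dx i) /\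
        derivable_pt_lim (y i) t (dy i) /\ derivable_pt_lim (z i) t (dz i)) ->
    c <= sumN N (fun i => (dx i)^2 + (dy i)^2 + (dz i)^2)) v.

(** A vertical kick of size [eps] separating two colliding
    bodies costs kinetic energy of order [eps^2], since [f] can descend over a
    window of fixed length.  Near the collision, on [[0, d1]] with
    [d1 ~ eps^2], the two bodies are horizontally within [eps] of each other
    (a Hölder-1/2 estimate from the finite kinetic energy), so the kick
    separates them vertically by at least [eps] and lowers their mutual
    potential by at least [1/(4 eps)]; over half of [[0, d1]] this gains a
    quantity of order [eps].  The rest of the potential can only decrease,
    because all bodies lie in one horizontal plane: this follows from the
    vertical equations of motion, which force the topmost body to feel no net
    vertical pull.  Energy conservation bounds the potential by the kinetic
    energy, which keeps the action of the perturbed path finite. *)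

From Stdlib Require Import Reals Lra Lia ZArith IndefiniteDescription.
From Coquelicot Require Import Coquelicot.
Open Scope R_scope.

Lemma sumN_ext n f g : (forall i, (i < n)%nat -> f i = g i) -> sumN n f = sumN n g.
Proof.
  induction n as [|n IH]; simpl; intros H; auto.
  rewrite IH by (intros; apply H; lia). rewrite H by lia. auto.
Qed.

Lemma sumN_add n f g : sumN n (fun i => f i + g i) = sumN n f + sumN n g.
Proof. induction n; simpl; [lra|]. rewrite IHn; lra. Qed.

Lemma sumN_scal n c f : sumN n (fun i => c * f i) = c * sumN n f.
Proof. induction n; simpl; [lra|]. rewrite IHn; lra. Qed.

Lemma sumN_opp n f : sumN n (fun i => - f i) = - sumN n f.
Proof. induction n; simpl; [lra|]. rewrite IHn; lra. Qed.

Lemma sumN_0 n : sumN n (fun _ => 0) = 0.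
Proof. induction n; simpl; [lra|]. rewrite IHn; lra. Qed.

Lemma sumN_1 n : sumN n (fun _ => 1) = INR n.
Proof. induction n; simpl sumN; [simpl; lra|]. rewrite IHn, S_INR. ring. Qed.

Lemma sumN_le n f g : (forall i, (i < n)%nat -> f i <= g i) -> sumN n f <= sumN n g.
Proof.
  induction n as [|n IH]; simpl; intros H; [lra|].
  assert (f n <= g n) by (apply H; lia).
  assert (sumN n f <= sumN n g) by (apply IH; intros; apply H; lia).
  lra.
Qed.

Lemma sumN_ge0 n f : (forall i, (i < n)%nat -> 0 <= f i) -> 0 <= sumN n f.
Proof. intros H. rewrite <- (sumN_0 n). apply sumN_le. auto. Qed.

Lemma sumN_ge_term n f k :
  (forall i, (i < n)%nat -> 0 <= f i) -> (k < n)%nat -> f k <= sumN n f.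
Proof.
  induction n as [|n IH]; simpl; intros H Hk; [lia|].
  assert (0 <= f n) by (apply H; lia).
  destruct (Nat.eq_dec k n) as [->|Hkn].
  - assert (0 <= sumN n f) by (apply sumN_ge0; intros; apply H; lia). lra.
  - assert (f k <= sumN n f) by (apply IH; [intros; apply H|]; lia). lra.
Qed.

Lemma sumN_ge_pair n f k l : (forall i, (i < n)%nat -> 0 <= f i) ->
  (k < n)%nat -> (l < n)%nat -> k <> l -> f k + f l <= sumN n f.
Proof.
  induction n as [|n IH]; simpl; intros H Hk Hl Hkl; [lia|].
  assert (0 <= f n) by (apply H; lia).
  assert (H' : forall i, (i < n)%nat -> 0 <= f i) by (intros; apply H; lia).
  destruct (Nat.eq_dec k n); destruct (Nat.eq_dec l n); subst; try lia.
  - assert (f l <= sumN n f) by (apply sumN_ge_term; auto; lia). lra.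
  - assert (f k <= sumN n f) by (apply sumN_ge_term; auto; lia). lra.
  - assert (f k + f l <= sumN n f) by (apply IH; auto; lia). lra.
Qed.

Lemma sumN_eq0_term n f : (forall i, (i < n)%nat -> 0 <= f i) -> sumN n f = 0 ->
  forall k, (k < n)%nat -> f k = 0.
Proof.
  intros H H0 k Hk.
  assert (f k <= sumN n f) by (apply sumN_ge_term; auto).
  specialize (H k Hk). lra.
Qed.

Lemma sumN_triangle_ge_term n (g : nat -> nat -> R) j k :
  (forall i l, (l < i)%nat -> (i < n)%nat -> 0 <= g i l) ->
  (k < j)%nat -> (j < n)%nat -> g j k <= sumN n (fun i => sumN i (g i)).
Proof.
  intros H Hkj Hjn.
  apply Rle_trans with (sumN j (g j)).
  - apply sumN_ge_term; [intros; apply H|]; lia.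
  - apply (sumN_ge_term n (fun i => sumN i (g i))); [|lia].
    intros; apply sumN_ge0; intros; apply H; lia.
Qed.

Lemma sumN_offdiag_sym n (g : nat -> nat -> R) :
  sumN n (fun i => sumN n (fun l => if Nat.eqb l i then 0 else g i l)) =
  sumN n (fun i => sumN i (fun l => g i l + g l i)).
Proof.
  induction n as [|n IH]; simpl; [lra|].
  rewrite Nat.eqb_refl.
  rewrite (sumN_ext n (fun i => sumN n (fun l => if Nat.eqb l i then 0 else g i l)
                                + (if Nat.eqb n i then 0 else g i n))
                      (fun i => sumN n (fun l => if Nat.eqb l i then 0 else g i l) + g i n)).
  2:{ intros i Hi. destruct (Nat.eqb_spec n i); [lia|reflexivity]. }
  rewrite sumN_add, IH.
  rewrite (sumN_ext n (fun l => if Nat.eqb l n then 0 else g n l) (g n)).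
  2:{ intros l Hl. destruct (Nat.eqb_spec l n); [lia|reflexivity]. }
  rewrite sumN_add. lra.
Qed.

Lemma exists_argmax n (g : nat -> R) : (0 < n)%nat ->
  exists k, (k < n)%nat /\ forall l, (l < n)%nat -> g l <= g k.
Proof.
  induction n as [|n IH]; intros Hn; [lia|]. destruct n as [|n].
  - exists 0%nat. split; auto. intros l Hl. replace l with 0%nat by lia. lra.
  - destruct (IH ltac:(lia)) as [k [Hk Hm]].
    destruct (Rle_dec (g (S n)) (g k)).
    + exists k. split; [lia|]. intros l Hl.
      destruct (Nat.eq_dec l (S n)) as [->|]; auto. apply Hm; lia.
    + exists (S n). split; [lia|]. intros l Hl.
      destruct (Nat.eq_dec l (S n)) as [->|]; [lra|].
      assert (g l <= g k) by (apply Hm; lia). lra.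
Qed.

Lemma derivable_pt_lim_val_eq f t a b :
  derivable_pt_lim f t a -> a = b -> derivable_pt_lim f t b.
Proof. intros H ->; auto. Qed.

Lemma derivable_pt_lim_plus_fun f g t a b :
  derivable_pt_lim f t a -> derivable_pt_lim g t b ->
  derivable_pt_lim (fun s => f s + g s) t (a + b).
Proof. intros. apply (derivable_pt_lim_ext (f + g)%F); [reflexivity|]. apply derivable_pt_lim_plus; auto. Qed.

Lemma derivable_pt_lim_minus_fun f g t a b :
  derivable_pt_lim f t a -> derivable_pt_lim g t b ->
  derivable_pt_lim (fun s => f s - g s) t (a - b).
Proof. intros. apply (derivable_pt_lim_ext (f - g)%F); [reflexivity|]. apply derivable_pt_lim_minus; auto. Qed.

Lemma derivable_pt_lim_mult_fun f g t a b :
  derivable_pt_lim f t a -> derivable_pt_lim g t b ->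
  derivable_pt_lim (fun s => f s * g s) t (a * g t + f t * b).
Proof. intros. apply (derivable_pt_lim_ext (f * g)%F); [reflexivity|]. apply derivable_pt_lim_mult; auto. Qed.

Lemma derivable_pt_lim_const_fun c t : derivable_pt_lim (fun _ => c) t 0.
Proof. apply (derivable_pt_lim_ext (fct_cte c)); [reflexivity|]. apply derivable_pt_lim_const. Qed.

Lemma derivable_pt_lim_scal_fun c f t a :
  derivable_pt_lim f t a -> derivable_pt_lim (fun s => c * f s) t (c * a).
Proof.
  intros. apply (derivable_pt_lim_val_eq _ _ (0 * f t + c * a)); [|ring].
  apply (derivable_pt_lim_mult_fun (fun _ => c) f); auto using derivable_pt_lim_const_fun.
Qed.

Lemma derivable_pt_lim_sqr_fun f t a :
  derivable_pt_lim f t a -> derivable_pt_lim (fun s => f s ^ 2) t (2 * f t * a).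
Proof.
  intros. apply (derivable_pt_lim_ext (fun s => f s * f s)); [intros; ring|].
  apply (derivable_pt_lim_val_eq _ _ (a * f t + f t * a)); [|ring].
  apply derivable_pt_lim_mult_fun; auto.
Qed.

Lemma derivable_pt_lim_comp_fun f g t a b :
  derivable_pt_lim f t a -> derivable_pt_lim g (f t) b ->
  derivable_pt_lim (fun s => g (f s)) t (b * a).
Proof. intros. apply (derivable_pt_lim_ext (comp g f)); [reflexivity|]. apply derivable_pt_lim_comp; auto. Qed.

Lemma derivable_pt_lim_const_on g T t d : 0 < t < T ->
  (forall s, 0 <= s <= T -> g s = g 0) -> derivable_pt_lim g t d -> d = 0.
Proof.
  intros Ht Hc Hd. apply (uniqueness_limite g t); auto.
  apply (derivable_pt_lim_locally_ext (fun _ => g 0) g t 0 T); auto.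
  - intros s Hs. rewrite (Hc s); auto; lra.
  - apply derivable_pt_lim_const_fun.
Qed.

Lemma derivable_pt_lim_glue f g h p r l : 0 < r ->
  (forall s, p - r < s <= p -> f s = g s) -> (forall s, p <= s < p + r -> f s = h s) ->
  derivable_pt_lim g p l -> derivable_pt_lim h p l -> derivable_pt_lim f p l.
Proof.
  intros Hr Hg Hh Dg Dh eps Heps.
  destruct (Dg eps Heps) as [[dg Hdg0] Hdg]. destruct (Dh eps Heps) as [[dh Hdh0] Hdh].
  assert (Hd : 0 < Rmin r (Rmin dg dh)) by (repeat apply Rmin_pos; lra).
  exists (mkposreal _ Hd). intros hh Hh0 Hhh. simpl in *.
  assert (Hm1 := Rmin_l r (Rmin dg dh)). assert (Hm2 := Rmin_r r (Rmin dg dh)).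
  assert (Hm3 := Rmin_l dg dh). assert (Hm4 := Rmin_r dg dh).
  assert (Ha : Rabs hh < r) by lra. apply Rabs_lt_between in Ha.
  destruct (Rle_dec hh 0).
  - rewrite (Hg (p + hh)), (Hg p) by lra. apply Hdg; auto. lra.
  - rewrite (Hh (p + hh)), (Hh p) by lra. apply Hdh; auto. lra.
Qed.

Lemma continuity_pt_interval_ext f g a b t : a < t < b ->
  (forall s, a < s < b -> f s = g s) -> continuity_pt f t -> continuity_pt g t.
Proof.
  intros Ht E. apply continuity_pt_locally_ext with (Rmin (t - a) (b - t)).
  - apply Rmin_pos; lra.
  - intros s Hs. unfold Rdist in Hs. apply E.
    pose proof (Rmin_l (t - a) (b - t)). pose proof (Rmin_r (t - a) (b - t)).
    apply Rabs_lt_between in Hs. lra.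
Qed.

Lemma continuity_pt_sumN n (F : nat -> R -> R) t :
  (forall i, (i < n)%nat -> continuity_pt (F i) t) ->
  continuity_pt (fun s => sumN n (fun i => F i s)) t.
Proof.
  induction n as [|n IH]; simpl; intros H.
  - apply continuity_pt_const. intros u v; reflexivity.
  - apply (continuity_pt_ext ((fun s => sumN n (fun i => F i s)) + F n)%F); [reflexivity|].
    apply continuity_pt_plus; [apply IH; intros|]; apply H; lia.
Qed.

Lemma derivable_pt_lim_sumN n (F : nat -> R -> R) (F' : nat -> R) t :
  (forall i, (i < n)%nat -> derivable_pt_lim (F i) t (F' i)) ->
  derivable_pt_lim (fun s => sumN n (fun i => F i s)) t (sumN n F').
Proof.
  induction n as [|n IH]; simpl; intros H.
  - apply derivable_pt_lim_const_fun.
  - apply derivable_pt_lim_plus_fun; [apply IH; intros|]; apply H; lia.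
Qed.

Lemma cont_on_of_derivable g g' T : (forall t, derivable_pt_lim g t (g' t)) -> cont_on 0 T g.
Proof.
  intros H t _ e He.
  assert (Hc : continuity_pt g t) by (apply derivable_continuous_pt; exists (g' t); apply H).
  destruct (Hc e He) as [d [Hd Hd']]. exists d. split; auto. intros s _ Hs.
  destruct (Req_dec s t) as [->|Hst].
  - rewrite Rminus_diag, Rabs_R0. auto.
  - apply Hd'. split; [split; [exact I|auto]|auto].
Qed.

(** [clamp T] retracts [R] onto [[0, T]], turning continuity on [[0, T]] into
    continuity everywhere. *)
Definition clamp (T t : R) := Rmax 0 (Rmin T t).

Lemma clamp_in T t : 0 <= T -> 0 <= clamp T t <= T.
Proof. intros. unfold clamp, Rmax, Rmin. destruct (Rle_dec T t); destruct (Rle_dec 0 _); lra. Qed.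

Lemma clamp_id T t : 0 <= t <= T -> clamp T t = t.
Proof. intros. unfold clamp, Rmax, Rmin. destruct (Rle_dec T t); destruct (Rle_dec 0 _); lra. Qed.

Lemma clamp_lipschitz T s t : 0 <= T -> Rabs (clamp T s - clamp T t) <= Rabs (s - t).
Proof.
  intros. unfold clamp, Rmax, Rmin.
  destruct (Rle_dec T s); destruct (Rle_dec T t); repeat destruct (Rle_dec 0 _);
    unfold Rabs; repeat destruct (Rcase_abs _); lra.
Qed.

Lemma continuity_pt_clamp T g : 0 <= T -> cont_on 0 T g ->
  forall t, continuity_pt (fun s => g (clamp T s)) t.
Proof.
  intros HT Hc t e He.
  destruct (Hc (clamp T t) (clamp_in T t HT) e He) as [d [Hd Hd']].
  exists d. split; auto. intros s [_ Hs]. simpl in *. unfold R_dist in *.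
  apply Hd'; [apply clamp_in; auto|].
  pose proof (clamp_lipschitz T s t HT). lra.
Qed.

Lemma cont_on_sumN_sqr_bounded N T (x y : nat -> R -> R) : 0 <= T ->
  (forall i, (i < N)%nat -> cont_on 0 T (x i) /\ cont_on 0 T (y i)) ->
  exists B, forall t, 0 <= t <= T -> sumN N (fun i => x i t ^ 2 + y i t ^ 2) <= B.
Proof.
  intros HT Hc.
  set (g := fun s => sumN N (fun i => x i (clamp T s) ^ 2 + y i (clamp T s) ^ 2)).
  destruct (continuity_ab_maj g 0 T HT) as [tM [HM _]].
  { intros t _. apply (continuity_pt_sumN N (fun i s => x i (clamp T s) ^ 2 + y i (clamp T s) ^ 2)).
    intros i Hi. destruct (Hc i Hi) as [cx cy].
    apply (continuity_pt_ext (fun s => x i (clamp T s) * x i (clamp T s)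
                                      + y i (clamp T s) * y i (clamp T s))); [intros; ring|].
    apply (continuity_pt_plus (fun s => _ * _) (fun s => _ * _));
      apply (continuity_pt_mult (fun s => _ (clamp T s)) (fun s => _ (clamp T s)));
      apply continuity_pt_clamp; auto. }
  exists (g tM). intros t Ht. specialize (HM t Ht). unfold g in HM.
  rewrite clamp_id in HM by auto. exact HM.
Qed.

Lemma IsStepFun_const_open a b c (g : R -> R) : a <= b ->
  (forall x, a < x < b -> g x = c) -> IsStepFun g a b.
Proof.
  intros Hab H. exists (cons a (cons b nil)), (cons c nil).
  repeat split.
  - intros i Hi. simpl in Hi. destruct i; [simpl; lra|lia].
  - simpl. unfold Rmin. destruct (Rle_dec a b); lra.
  - simpl. unfold Rmax. destruct (Rle_dec a b); lra.
  - intros i Hi. simpl in Hi. destruct i; [|lia]. intros x Hx. apply H; auto.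
Qed.

Lemma IsStepFun_ext f g a b : IsStepFun f a b ->
  (forall x, Rmin a b <= x <= Rmax a b -> f x = g x) -> IsStepFun g a b.
Proof.
  intros [l [lf [Hord [H0 [H1 [Hlen Hc]]]]]] E. exists l, lf. repeat split; auto.
  intros i Hi x Hx. rewrite <- E; [apply Hc; auto|].
  unfold open_interval in Hx. rewrite RList.RList_P6 in Hord.
  assert (RList.pos_Rl l 0 <= RList.pos_Rl l i) by (apply Hord; lia).
  assert (RList.pos_Rl l (S i) <= RList.pos_Rl l (pred (length l))) by (apply Hord; lia).
  lra.
Qed.

Lemma RiemannInt_SF_ext a b (f g : StepFun a b) : a <= b ->
  (forall x, a < x < b -> f x = g x) -> RiemannInt_SF f = RiemannInt_SF g.
Proof. intros Hab H. apply Rle_antisym; apply StepFun_P37; auto; intros x Hx; rewrite H; auto; lra. Qed.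

Lemma RiemannInt_SF_const_open a b c (f : StepFun a b) : a <= b ->
  (forall x, a < x < b -> f x = c) -> RiemannInt_SF f = c * (b - a).
Proof. intros Hab H. rewrite <- (StepFun_P18 a b c). apply RiemannInt_SF_ext; auto. Qed.

Lemma StepFun_lincomb a b (f g : StepFun a b) (al be : R) :
  {h : StepFun a b | (forall x, h x = al * f x + be * g x) /\
                     RiemannInt_SF h = al * RiemannInt_SF f + be * RiemannInt_SF g}.
Proof.
  set (h1 := mkStepFun (StepFun_P28 al (mkStepFun (StepFun_P4 a b 0)) f)).
  exists (mkStepFun (StepFun_P28 be h1 g)). split.
  - intros x. simpl. unfold fct_cte. ring.
  - rewrite StepFun_P30. unfold h1. rewrite StepFun_P30, StepFun_P18. ring.
Qed.

Definition extend_zero (c d : R) (phi : R -> R) (x : R) : R :=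
  if Rle_dec c x then if Rle_dec x d then phi x else 0 else 0.

Lemma StepFun_extend_zero a b c d (phi : StepFun c d) : a <= c -> c <= d -> d <= b ->
  {F : StepFun a b | (forall x, F x = extend_zero c d phi x) /\ RiemannInt_SF F = RiemannInt_SF phi}.
Proof.
  intros Hac Hcd Hdb.
  assert (out1 : forall x, a < x < c -> extend_zero c d phi x = 0).
  { intros x Hx. unfold extend_zero. destruct (Rle_dec c x); [lra|auto]. }
  assert (out2 : forall x, d < x < b -> extend_zero c d phi x = 0).
  { intros x Hx. unfold extend_zero. destruct (Rle_dec c x); [|auto].
    destruct (Rle_dec x d); [lra|auto]. }
  assert (inn : forall x, c <= x <= d -> phi x = extend_zero c d phi x).
  { intros x Hx. unfold extend_zero.
    destruct (Rle_dec c x); [|lra]. destruct (Rle_dec x d); [auto|lra]. }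
  assert (p1 : IsStepFun (extend_zero c d phi) a c) by (apply (IsStepFun_const_open a c 0); auto).
  assert (p2 : IsStepFun (extend_zero c d phi) c d).
  { apply (IsStepFun_ext phi); [apply (pre phi)|]. rewrite Rmin_left, Rmax_right by lra. auto. }
  assert (p3 : IsStepFun (extend_zero c d phi) d b) by (apply (IsStepFun_const_open d b 0); auto).
  set (p23 := StepFun_P46 p2 p3). set (p := StepFun_P46 p1 p23).
  exists (mkStepFun p). split; [reflexivity|].
  rewrite <- (@StepFun_P43 _ a c b p1 p23 p), <- (@StepFun_P43 _ c d b p2 p3 p23).
  rewrite (RiemannInt_SF_const_open a c 0 (mkStepFun p1)), (RiemannInt_SF_const_open d b 0 (mkStepFun p3)) by auto.
  rewrite (RiemannInt_SF_ext c d (mkStepFun p2) phi); [ring|auto|].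
  intros x Hx. symmetry. apply inn. lra.
Qed.

Definition indicator (c d x : R) : R := if Rle_dec c x then if Rle_dec x d then 1 else 0 else 0.

Lemma indicator_bounds c d x : 0 <= indicator c d x <= 1.
Proof. unfold indicator. destruct (Rle_dec c x); [destruct (Rle_dec x d)|]; lra. Qed.

Lemma StepFun_indicator a b c d : a <= c -> c <= d -> d <= b ->
  {F : StepFun a b | (forall x, F x = indicator c d x) /\ RiemannInt_SF F = d - c}.
Proof.
  intros. destruct (StepFun_extend_zero a b c d (mkStepFun (StepFun_P4 c d 1))) as [F [HF HI]]; auto.
  exists F. split.
  - intros x. rewrite HF. reflexivity.
  - rewrite HI, StepFun_P18. ring.
Qed.

Lemma StepFun_below_RiemannInt f a b (pr : Riemann_integrable f a b) : a <= b ->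
  forall eta, 0 < eta -> exists phi : StepFun a b,
    (forall t, a <= t <= b -> phi t <= f t) /\ RiemannInt pr - eta <= RiemannInt_SF phi.
Proof.
  intros Hab eta Heta. unfold RiemannInt. destruct (RiemannInt_exists pr RinvN RinvN_cv) as [I HI].
  destruct (HI (eta / 2)) as [N1 HN1]; [lra|].
  destruct (archimed (2 / eta)) as [Ha _].
  assert (Heta2 : 0 < 2 / eta) by (apply Rdiv_lt_0_compat; lra).
  assert (HZ : (0 <= up (2 / eta))%Z) by (apply le_IZR; lra).
  set (n := (N1 + Z.to_nat (up (2 / eta)))%nat).
  destruct (phi_sequence_prop RinvN pr n) as [psi [Hpsi Hint]].
  destruct (StepFun_lincomb a b (phi_sequence RinvN pr n) psi 1 (-1)) as [h [Hh Hhi]].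
  exists h. split.
  - intros t Ht. rewrite Hh.
    assert (Rmin a b <= t <= Rmax a b) by (rewrite Rmin_left, Rmax_right; lra).
    specialize (Hpsi t H). apply Rabs_le_between in Hpsi. lra.
  - rewrite Hhi. specialize (HN1 n ltac:(unfold n; lia)). unfold R_dist in HN1.
    apply Rabs_lt_between in HN1. apply Rabs_lt_between in Hint. unfold RinvN in Hint. simpl in Hint.
    assert (Hn : INR n >= 2 / eta).
    { unfold n. rewrite plus_INR, (INR_IZR_INZ (Z.to_nat _)), Z2Nat.id by auto.
      pose proof (pos_INR N1). lra. }
    assert (/ (INR n + 1) < eta / 2).
    { apply (Rmult_lt_reg_l (INR n + 1)); [lra|]. rewrite Rinv_r by lra.
      assert (INR n * eta >= 2).
      { replace 2 with (2 / eta * eta) by (field; lra). apply Rmult_ge_compat_r; lra. }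
      nra. }
    lra.
Qed.

Lemma RiemannInt_derive G g a b (pr : Riemann_integrable g a b) : a < b ->
  (forall x, a <= x <= b -> derivable_pt_lim G x (g x)) ->
  (forall x, a <= x <= b -> continuity_pt g x) -> RiemannInt pr = G b - G a.
Proof.
  intros Hab HD HC. assert (h : a <= b) by lra.
  rewrite (RiemannInt_P20 h (FTC_P1 h HC) pr).
  set (P := primitive h (FTC_P1 h HC)).
  destruct (MVT_cor2 (fun x => P x - G x) (fun _ => 0) a b Hab) as [c [Hc _]].
  { intros c Hc. replace 0 with (g c - g c) by ring.
    apply (derivable_pt_lim_minus P G); [apply RiemannInt_P28|apply HD]; auto. }
  lra.
Qed.

(** Cauchy-Schwarz, from the nonnegativity of the integral of [(g - m)^2]
    where [m] is the mean slope of the primitive [G]. *)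
Lemma RiemannInt_sqr_ge G g a b (pr : Riemann_integrable (fun x => g x ^ 2) a b) : a < b ->
  (forall x, a <= x <= b -> derivable_pt_lim G x (g x)) ->
  (forall x, a <= x <= b -> continuity_pt g x) -> (G b - G a) ^ 2 <= (b - a) * RiemannInt pr.
Proof.
  intros Hab HD HC. assert (h : a <= b) by lra.
  set (m := (G b - G a) / (b - a)).
  assert (Cg2 : forall x, a <= x <= b -> continuity_pt (fun x => g x ^ 2) x).
  { intros x Hx. apply (continuity_pt_ext (g * g)%F); [intros; unfold mult_fct; ring|].
    apply continuity_pt_mult; auto. }
  assert (Cq : forall x, a <= x <= b -> continuity_pt (fun x => g x ^ 2 + (-2 * m) * g x) x).
  { intros x Hx. apply (continuity_pt_ext ((fun x => (g x ^ 2)%R) + mult_real_fct (-2 * m) g)%F);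
      [intros; reflexivity|].
    apply continuity_pt_plus; auto. apply continuity_pt_scal; auto. }
  assert (Cr : forall x, a <= x <= b ->
            continuity_pt (fun x => (g x ^ 2 + (-2 * m) * g x) + m ^ 2 * fct_cte 1 x) x).
  { intros x Hx.
    apply (continuity_pt_ext ((fun x => (g x ^ 2 + (-2 * m) * g x)%R) + mult_real_fct (m ^ 2) (fct_cte 1))%F);
      [intros; reflexivity|].
    apply continuity_pt_plus; auto. apply continuity_pt_scal, continuity_pt_const.
    intros u v; reflexivity. }
  set (p1 := continuity_implies_RiemannInt h HC).
  set (pq := continuity_implies_RiemannInt h Cq).
  set (pr' := continuity_implies_RiemannInt h Cr).
  assert (E1 : RiemannInt pq = RiemannInt pr + (-2 * m) * RiemannInt p1) by apply RiemannInt_P13.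
  assert (E2 : RiemannInt pr' = RiemannInt pq + m ^ 2 * RiemannInt (RiemannInt_P14 a b 1))
    by apply RiemannInt_P13.
  rewrite RiemannInt_P15 in E2. rewrite (RiemannInt_derive G g a b p1) in E1; auto.
  assert (P0 : RiemannInt (RiemannInt_P14 a b 0) <= RiemannInt pr').
  { apply RiemannInt_P19; auto. intros x Hx. unfold fct_cte.
    pose proof (pow2_ge_0 (g x - m)). lra. }
  rewrite RiemannInt_P15 in P0.
  assert (Hm : G b - G a = m * (b - a)) by (unfold m; field; lra).
  rewrite Hm in *. nra.
Qed.

Lemma lower_integral_ge0 T Ge v : 0 <= T ->
  (forall t, 0 < t < T -> Ge t 0) -> lower_integral_is 0 T Ge v -> 0 <= v.
Proof.
  intros HT H0 [Hub _].
  assert (RiemannInt_SF (mkStepFun (StepFun_P4 0 T 0)) <= v).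
  { apply Hub. exists (mkStepFun (StepFun_P4 0 T 0)). split; [|reflexivity].
    intros t Ht. apply H0; auto. }
  rewrite StepFun_P18 in H. lra.
Qed.

Lemma RiemannInt_le_lower_integral (T a b v : R) (Ge : R -> R -> Prop) (h : R -> R)
  (pr : Riemann_integrable h a b) :
  0 <= a -> a <= b -> b <= T -> lower_integral_is 0 T Ge v ->
  (forall t, 0 < t < T -> Ge t 0) ->
  (forall t c, a <= t <= b -> 0 < t < T -> c <= h t -> Ge t (/ 2 * c)) ->
  RiemannInt pr <= 2 * v.
Proof.
  intros Ha Hab Hb [Hub _] H0 H1.
  assert (RiemannInt pr / 2 <= v); [|lra].
  apply le_epsilon. intros eta Heta.
  destruct (StepFun_below_RiemannInt h a b pr Hab (2 * eta)) as [phi [Hphi Hint]]; [lra|].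
  destruct (StepFun_lincomb a b phi phi (/ 2) 0) as [phi2 [Hp2 Hi2]].
  destruct (StepFun_extend_zero 0 T a b phi2) as [F [HF HFi]]; auto.
  assert (RiemannInt_SF F <= v).
  { apply Hub. exists F. split; auto. intros t Ht. rewrite HF. unfold extend_zero.
    destruct (Rle_dec a t); [|apply H0; auto]. destruct (Rle_dec t b); [|apply H0; auto].
    rewrite Hp2. replace (/ 2 * phi t + 0 * phi t) with (/ 2 * phi t) by ring. apply H1; auto. }
  lra.
Qed.

(** * The cutoff profile *)

(** The cubic Hermite step [1 - 3 s^2 + 2 s^3] has zero slope at [s = 0] and
    [s = 1], so [cutoff] is [C^1]. *)
Definition step_down (s : R) := 1 - 3 * s ^ 2 + 2 * s ^ 3.
Definition step_down' (s : R) := -6 * s + 6 * s ^ 2.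

Definition cutoff (d1 L t : R) : R :=
  if Rle_dec t d1 then 1 else if Rle_dec (d1 + L) t then 0 else step_down ((t - d1) / L).
Definition cutoff' (d1 L t : R) : R :=
  if Rle_dec t d1 then 0 else if Rle_dec (d1 + L) t then 0 else step_down' ((t - d1) / L) / L.

Lemma step_down_decreasing s t : 0 <= s -> s < t -> t <= 1 -> step_down t < step_down s.
Proof.
  intros. unfold step_down.
  assert (0 < 3 * (s + t) - 2 * (s ^ 2 + s * t + t ^ 2)) by nra.
  replace (1 - 3 * s ^ 2 + 2 * s ^ 3 - (1 - 3 * t ^ 2 + 2 * t ^ 3))
    with ((t - s) * (3 * (s + t) - 2 * (s ^ 2 + s * t + t ^ 2))) by ring.
  nra.
Qed.

Lemma derivable_pt_lim_step_down d1 L t : L <> 0 ->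
  derivable_pt_lim (fun t => step_down ((t - d1) / L)) t (step_down' ((t - d1) / L) / L).
Proof. intros. unfold step_down, step_down'. apply is_derive_Reals. auto_derive; auto. field. auto. Qed.

Lemma cutoff_mid d1 L t : 0 < L -> d1 <= t <= d1 + L -> cutoff d1 L t = step_down ((t - d1) / L).
Proof.
  intros HL Ht. unfold cutoff, step_down. destruct (Rle_dec t d1).
  - replace ((t - d1) / L) with 0 by (field_simplify; [|lra]; replace t with d1 by lra; lra). ring.
  - destruct (Rle_dec (d1 + L) t); auto.
    replace ((t - d1) / L) with 1 by (replace t with (d1 + L) by lra; field; lra). ring.
Qed.

Lemma cutoff_one d1 L t : t <= d1 -> cutoff d1 L t = 1.
Proof. intros. unfold cutoff. destruct (Rle_dec t d1); lra. Qed.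

Lemma cutoff_zero d1 L t : 0 < L -> d1 + L <= t -> cutoff d1 L t = 0.
Proof. intros. unfold cutoff. destruct (Rle_dec t d1); [lra|]. destruct (Rle_dec (d1 + L) t); lra. Qed.

Lemma cutoff_decreasing d1 L s t : 0 < L -> d1 <= s -> s < t -> t <= d1 + L ->
  cutoff d1 L t < cutoff d1 L s.
Proof.
  intros HL Hs Hst Ht. rewrite !cutoff_mid by lra. apply step_down_decreasing.
  - apply Rdiv_le_0_compat; lra.
  - apply Rmult_lt_compat_r; [apply Rinv_0_lt_compat|]; lra.
  - apply (Rmult_le_reg_r L); auto. unfold Rdiv. rewrite Rmult_assoc, Rinv_l; lra.
Qed.

Lemma derivable_pt_lim_cutoff d1 L t : 0 < L -> derivable_pt_lim (cutoff d1 L) t (cutoff' d1 L t).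
Proof.
  intros HL.
  assert (left1 : forall s, s <= d1 -> cutoff d1 L s = 1) by (intros; apply cutoff_one; auto).
  assert (right0 : forall s, d1 + L <= s -> cutoff d1 L s = 0) by (intros; apply cutoff_zero; auto).
  assert (mid : forall s, d1 <= s <= d1 + L -> cutoff d1 L s = step_down ((s - d1) / L))
    by (intros; apply cutoff_mid; auto).
  unfold cutoff' at 1. destruct (Rle_dec t d1) as [H1|H1]; [destruct (Req_dec t d1) as [->|Ht]|].
  - apply (derivable_pt_lim_glue _ (fun _ => 1) (fun t => step_down ((t - d1) / L)) d1 L 0 HL).
    + intros s Hs. apply left1. lra.
    + intros s Hs. apply mid. lra.
    + apply derivable_pt_lim_const_fun.
    + apply (derivable_pt_lim_val_eq _ _ _ _ (derivable_pt_lim_step_down d1 L d1 ltac:(lra))).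
      unfold step_down'. field. lra.
  - apply (derivable_pt_lim_locally_ext (fun _ => 1) _ t (t - 1) d1); [lra| |apply derivable_pt_lim_const_fun].
    intros s Hs. symmetry. apply left1. lra.
  - destruct (Rle_dec (d1 + L) t) as [H2|H2]; [destruct (Req_dec t (d1 + L)) as [->|Ht]|].
    + apply (derivable_pt_lim_glue _ (fun t => step_down ((t - d1) / L)) (fun _ => 0) (d1 + L) L 0 HL).
      * intros s Hs. apply mid. lra.
      * intros s Hs. apply right0. lra.
      * apply (derivable_pt_lim_val_eq _ _ _ _ (derivable_pt_lim_step_down d1 L (d1 + L) ltac:(lra))).
        unfold step_down'. field. lra.
      * apply derivable_pt_lim_const_fun.
    + apply (derivable_pt_lim_locally_ext (fun _ => 0) _ t (d1 + L) (t + 1));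
        [lra| |apply derivable_pt_lim_const_fun].
      intros s Hs. symmetry. apply right0. lra.
    + apply (derivable_pt_lim_locally_ext (fun t => step_down ((t - d1) / L)) _ t d1 (d1 + L));
        [lra| |apply derivable_pt_lim_step_down; lra].
      intros s Hs. symmetry. apply mid. lra.
Qed.

Lemma continuity_pt_cutoff' d1 L t : 0 < L -> t <> d1 -> t <> d1 + L ->
  continuity_pt (cutoff' d1 L) t.
Proof.
  intros HL H1 H2. destruct (Rlt_dec t d1); [|destruct (Rlt_dec (d1 + L) t)].
  - apply (continuity_pt_interval_ext (fun _ => 0) _ (t - 1) d1);
      [lra| |apply continuity_pt_const; intros u v; reflexivity].
    intros s Hs. unfold cutoff'. destruct (Rle_dec s d1); lra.
  - apply (continuity_pt_interval_ext (fun _ => 0) _ (d1 + L) (t + 1));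
      [lra| |apply continuity_pt_const; intros u v; reflexivity].
    intros s Hs. unfold cutoff'. destruct (Rle_dec s d1); [lra|]. destruct (Rle_dec (d1 + L) s); lra.
  - apply (continuity_pt_interval_ext (fun t => step_down' ((t - d1) / L) / L) _ d1 (d1 + L)); [lra| |].
    + intros s Hs. unfold cutoff'. destruct (Rle_dec s d1); [lra|]. destruct (Rle_dec (d1 + L) s); lra.
    + apply derivable_continuous_pt. exists (((-6 + 12 * ((t - d1) / L)) / L) / L).
      apply is_derive_Reals. unfold step_down'. auto_derive; auto. field. lra.
Qed.

(** The maximum of [|step_down'|] on [[0, 1]] is [3/2], reached at [1/2]. *)
Lemma cutoff'_sqr_le d1 L t : 0 < L ->
  cutoff' d1 L t ^ 2 <= 9 / (4 * L ^ 2) * indicator d1 (d1 + L) t.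
Proof.
  intros HL. assert (0 < 9 / (4 * L ^ 2)) by (apply Rdiv_lt_0_compat; nra).
  pose proof (indicator_bounds d1 (d1 + L) t).
  unfold cutoff'. destruct (Rle_dec t d1); [nra|]. destruct (Rle_dec (d1 + L) t); [nra|].
  unfold indicator. destruct (Rle_dec d1 t); [|lra]. destruct (Rle_dec t (d1 + L)); [|lra].
  set (s := (t - d1) / L).
  assert (0 <= s <= 1).
  { unfold s. split; [apply Rdiv_le_0_compat; lra|].
    apply (Rmult_le_reg_r L); auto. unfold Rdiv. rewrite Rmult_assoc, Rinv_l; lra. }
  unfold step_down'.
  replace (((-6 * s + 6 * s ^ 2) / L) ^ 2) with (36 * (s * (1 - s)) ^ 2 / L ^ 2) by (field; lra).
  replace (9 / (4 * L ^ 2) * 1) with ((9 / 4) / L ^ 2) by (field; lra).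
  unfold Rdiv. apply Rmult_le_compat_r; [apply Rlt_le, Rinv_0_lt_compat; nra|].
  assert (0 <= s * (1 - s) <= 1 / 4) by (pose proof (pow2_ge_0 (s - 1 / 2)); nra).
  nra.
Qed.

Lemma cutoff'_energy_finite d1 L T : 0 < L -> 0 <= T ->
  exists v, lower_integral_is 0 T (fun t c => c <= cutoff' d1 L t ^ 2) v.
Proof.
  intros HL HT.
  destruct (completeness (fun r => exists phi : StepFun 0 T,
              (forall t, 0 < t < T -> phi t <= cutoff' d1 L t ^ 2) /\ r = RiemannInt_SF phi))
    as [m Hm]; [|exists (RiemannInt_SF (mkStepFun (StepFun_P4 0 T 0)));
                 exists (mkStepFun (StepFun_P4 0 T 0)); split; auto;
                 intros t Ht; apply pow2_ge_0|exists m; exact Hm].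
  exists (9 / (4 * L ^ 2) * (T - 0)). intros r [phi [Hphi ->]].
  rewrite <- (StepFun_P18 0 T (9 / (4 * L ^ 2))).
  apply StepFun_P37; auto. intros t Ht. cbn [fe]. unfold fct_cte.
  eapply Rle_trans; [apply Hphi; auto|]. eapply Rle_trans; [apply cutoff'_sqr_le; auto|].
  pose proof (indicator_bounds d1 (d1 + L) t).
  assert (0 < 9 / (4 * L ^ 2)) by (apply Rdiv_lt_0_compat; nra). nra.
Qed.

Lemma dist3_comm X Y Z i l t : dist3 X Y Z l i t = dist3 X Y Z i l t.
Proof. unfold dist3. f_equal. ring. Qed.

Lemma dist3_gt0 X Y Z i l t :
  0 < (X i t - X l t) ^ 2 + (Y i t - Y l t) ^ 2 + (Z i t - Z l t) ^ 2 -> 0 < dist3 X Y Z i l t.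
Proof. intros. unfold dist3. apply sqrt_lt_R0. auto. Qed.

Lemma sqr_dist_gt0 a b c d e f : ~ (a = b /\ c = d /\ e = f) ->
  0 < (a - b) ^ 2 + (c - d) ^ 2 + (e - f) ^ 2.
Proof.
  intros H. pose proof (pow2_ge_0 (a - b)). pose proof (pow2_ge_0 (c - d)). pose proof (pow2_ge_0 (e - f)).
  destruct (Req_dec a b); [destruct (Req_dec c d); [destruct (Req_dec e f)|]|].
  - exfalso; auto.
  - assert (0 < (e - f) ^ 2) by (apply pow2_gt_0; lra). lra.
  - assert (0 < (c - d) ^ 2) by (apply pow2_gt_0; lra). lra.
  - assert (0 < (a - b) ^ 2) by (apply pow2_gt_0; lra). lra.
Qed.

Lemma collision_free_sqr_dist_gt0 N x y z t i l : collision_free N x y z t ->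
  (i < N)%nat -> (l < N)%nat -> i <> l ->
  0 < (x i t - x l t) ^ 2 + (y i t - y l t) ^ 2 + (z i t - z l t) ^ 2.
Proof. intros H Hi Hl Hil. apply sqr_dist_gt0. apply H; auto. Qed.

Lemma derivable_pt_lim_inv_dist3 X Y Z VX VY VZ i l t :
  0 < (X i t - X l t) ^ 2 + (Y i t - Y l t) ^ 2 + (Z i t - Z l t) ^ 2 ->
  derivable_pt_lim (X i) t (VX i t) -> derivable_pt_lim (X l) t (VX l t) ->
  derivable_pt_lim (Y i) t (VY i t) -> derivable_pt_lim (Y l) t (VY l t) ->
  derivable_pt_lim (Z i) t (VZ i t) -> derivable_pt_lim (Z l) t (VZ l t) ->
  derivable_pt_lim (fun s => 1 / dist3 X Y Z i l s) t
   (- ((X i t - X l t) * (VX i t - VX l t) + (Y i t - Y l t) * (VY i t - VY l t)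
       + (Z i t - Z l t) * (VZ i t - VZ l t)) / dist3 X Y Z i l t ^ 3).
Proof.
  intros HS H1 H2 H3 H4 H5 H6.
  set (S := fun s => (X i s - X l s) ^ 2 + (Y i s - Y l s) ^ 2 + (Z i s - Z l s) ^ 2).
  set (P := (X i t - X l t) * (VX i t - VX l t) + (Y i t - Y l t) * (VY i t - VY l t)
            + (Z i t - Z l t) * (VZ i t - VZ l t)).
  assert (DS : derivable_pt_lim S t (2 * P)).
  { apply (derivable_pt_lim_val_eq _ _
      (2 * (X i t - X l t) * (VX i t - VX l t) + 2 * (Y i t - Y l t) * (VY i t - VY l t)
       + 2 * (Z i t - Z l t) * (VZ i t - VZ l t))); [|unfold P; ring].
    repeat apply derivable_pt_lim_plus_fun;
      apply (derivable_pt_lim_sqr_fun (fun s => _ s - _ s)); apply derivable_pt_lim_minus_fun; auto. }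
  assert (Hd : 0 < dist3 X Y Z i l t) by (apply dist3_gt0; auto).
  assert (Dd : derivable_pt_lim (dist3 X Y Z i l) t (/ (2 * dist3 X Y Z i l t) * (2 * P))).
  { apply (derivable_pt_lim_comp_fun S sqrt); auto. apply derivable_pt_lim_sqrt. auto. }
  apply (derivable_pt_lim_ext (fct_cte 1 / dist3 X Y Z i l)%F); [reflexivity|].
  apply (derivable_pt_lim_val_eq _ _
    ((0 * dist3 X Y Z i l t - (/ (2 * dist3 X Y Z i l t) * (2 * P)) * fct_cte 1 t)
     / Rsqr (dist3 X Y Z i l t))).
  - apply derivable_pt_lim_div; auto; [apply derivable_pt_lim_const|lra].
  - unfold fct_cte, Rsqr, P. field. lra.
Qed.

Lemma velocity_dot_force N X Y Z VX VY VZ i t :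
  VX i t * force N X Y Z X i t + VY i t * force N X Y Z Y i t + VZ i t * force N X Y Z Z i t =
  - sumN N (fun l => if Nat.eqb l i then 0 else
      (VX i t * (X i t - X l t) + VY i t * (Y i t - Y l t) + VZ i t * (Z i t - Z l t))
      / dist3 X Y Z i l t ^ 3).
Proof.
  unfold force. rewrite <- !Ropp_mult_distr_r, <- !sumN_scal, <- !Ropp_plus_distr, <- !sumN_add.
  f_equal. apply sumN_ext. intros l Hl. destruct (Nat.eqb l i); [ring|]. unfold Rdiv. ring.
Qed.

Definition newton_motion (N : nat) (X Y Z VX VY VZ AX AY AZ : nat -> R -> R) (i : nat) (t : R) : Prop :=
  derivable_pt_lim (X i) t (VX i t) /\ derivable_pt_lim (VX i) t (AX i t) /\
  derivable_pt_lim (Y i) t (VY i t) /\ derivable_pt_lim (VY i) t (AY i t) /\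
  derivable_pt_lim (Z i) t (VZ i t) /\ derivable_pt_lim (VZ i) t (AZ i t) /\
  AX i t = force N X Y Z X i t /\ AY i t = force N X Y Z Y i t /\ AZ i t = force N X Y Z Z i t.

Lemma derivable_pt_lim_energy N X Y Z VX VY VZ AX AY AZ t :
  (forall i l, (i < N)%nat -> (l < N)%nat -> i <> l ->
     0 < (X i t - X l t) ^ 2 + (Y i t - Y l t) ^ 2 + (Z i t - Z l t) ^ 2) ->
  (forall i, (i < N)%nat -> newton_motion N X Y Z VX VY VZ AX AY AZ i t) ->
  derivable_pt_lim (fun s => / 2 * sumN N (fun i => VX i s ^ 2 + VY i s ^ 2 + VZ i s ^ 2) - U N X Y Z s) t 0.
Proof.
  intros Hpos Hd.
  set (dU := fun i l => - ((X i t - X l t) * (VX i t - VX l t) + (Y i t - Y l t) * (VY i t - VY l t)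
                           + (Z i t - Z l t) * (VZ i t - VZ l t)) / dist3 X Y Z i l t ^ 3).
  apply (derivable_pt_lim_val_eq _ _
    (/ 2 * sumN N (fun i => 2 * VX i t * AX i t + 2 * VY i t * AY i t + 2 * VZ i t * AZ i t)
     - sumN N (fun i => sumN i (dU i)))).
  - apply derivable_pt_lim_minus_fun; [apply derivable_pt_lim_scal_fun|].
    + apply (derivable_pt_lim_sumN N (fun i s => VX i s ^ 2 + VY i s ^ 2 + VZ i s ^ 2)).
      intros i Hi. destruct (Hd i Hi) as (h1 & h2 & h3 & h4 & h5 & h6 & _).
      repeat apply derivable_pt_lim_plus_fun; apply derivable_pt_lim_sqr_fun; auto.
    + apply (derivable_pt_lim_sumN N (fun i s => sumN i (fun l => 1 / dist3 X Y Z i l s))).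
      intros i Hi. apply (derivable_pt_lim_sumN i (fun l s => 1 / dist3 X Y Z i l s)). intros l Hl.
      destruct (Hd i Hi) as (h1 & _ & h3 & _ & h5 & _).
      destruct (Hd l ltac:(lia)) as (k1 & _ & k3 & _ & k5 & _).
      apply derivable_pt_lim_inv_dist3; auto. apply Hpos; lia.
  - (* the kinetic term is [sum_i v_i . F_i], which pairs up into [sum_{l < i} dU i l] *)
    rewrite (sumN_ext N (fun i => 2 * VX i t * AX i t + 2 * VY i t * AY i t + 2 * VZ i t * AZ i t)
      (fun i => 2 * - sumN N (fun l => if Nat.eqb l i then 0 else
         (VX i t * (X i t - X l t) + VY i t * (Y i t - Y l t) + VZ i t * (Z i t - Z l t))
         / dist3 X Y Z i l t ^ 3))).
    2:{ intros i Hi. rewrite <- velocity_dot_force.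
        destruct (Hd i Hi) as (_ & _ & _ & _ & _ & _ & e1 & e2 & e3). rewrite e1, e2, e3. ring. }
    rewrite sumN_scal, sumN_opp, sumN_offdiag_sym.
    rewrite (sumN_ext N (fun i => sumN i (dU i)) (fun i => - sumN i (fun l =>
       (VX i t * (X i t - X l t) + VY i t * (Y i t - Y l t) + VZ i t * (Z i t - Z l t)) / dist3 X Y Z i l t ^ 3 +
       (VX l t * (X l t - X i t) + VY l t * (Y l t - Y i t) + VZ l t * (Z l t - Z i t)) / dist3 X Y Z l i t ^ 3))).
    2:{ intros i Hi. rewrite <- sumN_opp. apply sumN_ext. intros l Hl.
        unfold dU. rewrite dist3_comm. unfold Rdiv. ring. }
    rewrite sumN_opp. field.
Qed.

(** * From the rotating frame to the inertial frame *)

Lemma rot_sqr_norm w t a b :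
  (cos (w * t) * a - sin (w * t) * b) ^ 2 + (sin (w * t) * a + cos (w * t) * b) ^ 2 = a ^ 2 + b ^ 2.
Proof.
  replace ((cos (w * t) * a - sin (w * t) * b) ^ 2 + (sin (w * t) * a + cos (w * t) * b) ^ 2)
    with ((Rsqr (sin (w * t)) + Rsqr (cos (w * t))) * (a ^ 2 + b ^ 2)) by (unfold Rsqr; ring).
  rewrite sin2_cos2. ring.
Qed.

Lemma rot_sqr_dist w x y i l t :
  (rotX w x y i t - rotX w x y l t) ^ 2 + (rotY w x y i t - rotY w x y l t) ^ 2 =
  (x i t - x l t) ^ 2 + (y i t - y l t) ^ 2.
Proof.
  unfold rotX, rotY. rewrite <- (rot_sqr_norm w t (x i t - x l t) (y i t - y l t)). ring.
Qed.

Lemma dist3_rot w x y z i l t : dist3 (rotX w x y) (rotY w x y) z i l t = dist3 x y z i l t.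
Proof. unfold dist3. rewrite rot_sqr_dist. reflexivity. Qed.

Lemma U_rot N w x y z t : U N (rotX w x y) (rotY w x y) z t = U N x y z t.
Proof. unfold U. apply sumN_ext; intros; apply sumN_ext; intros. rewrite dist3_rot. auto. Qed.

Lemma collision_free_rot_sqr_dist_gt0 N w x y z t i l : collision_free N x y z t ->
  (i < N)%nat -> (l < N)%nat -> i <> l ->
  0 < (rotX w x y i t - rotX w x y l t) ^ 2 + (rotY w x y i t - rotY w x y l t) ^ 2 + (z i t - z l t) ^ 2.
Proof. intros. rewrite rot_sqr_dist. apply collision_free_sqr_dist_gt0 with N; auto. Qed.

Lemma derivable_pt_lim_rotX w x y i t dx dy :
  derivable_pt_lim (x i) t dx -> derivable_pt_lim (y i) t dy ->
  derivable_pt_lim (rotX w x y i) t (cos (w * t) * (dx - w * y i t) - sin (w * t) * (dy + w * x i t)).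
Proof.
  intros Hx Hy. unfold rotX.
  assert (Dc : derivable_pt_lim (fun s => cos (w * s)) t (- sin (w * t) * w))
    by (apply is_derive_Reals; auto_derive; auto; ring).
  assert (Ds : derivable_pt_lim (fun s => sin (w * s)) t (cos (w * t) * w))
    by (apply is_derive_Reals; auto_derive; auto; ring).
  apply (derivable_pt_lim_val_eq _ _
    ((- sin (w * t) * w) * x i t + cos (w * t) * dx - ((cos (w * t) * w) * y i t + sin (w * t) * dy)));
    [|ring].
  apply (derivable_pt_lim_minus_fun (fun s => cos (w * s) * x i s) (fun s => sin (w * s) * y i s));
    apply (derivable_pt_lim_mult_fun (fun s => _ (w * s))); auto.
Qed.

Lemma derivable_pt_lim_rotY w x y i t dx dy :
  derivable_pt_lim (x i) t dx -> derivable_pt_lim (y i) t dy ->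
  derivable_pt_lim (rotY w x y i) t (sin (w * t) * (dx - w * y i t) + cos (w * t) * (dy + w * x i t)).
Proof.
  intros Hx Hy. unfold rotY.
  assert (Dc : derivable_pt_lim (fun s => cos (w * s)) t (- sin (w * t) * w))
    by (apply is_derive_Reals; auto_derive; auto; ring).
  assert (Ds : derivable_pt_lim (fun s => sin (w * s)) t (cos (w * t) * w))
    by (apply is_derive_Reals; auto_derive; auto; ring).
  apply (derivable_pt_lim_val_eq _ _
    ((cos (w * t) * w) * x i t + sin (w * t) * dx + ((- sin (w * t) * w) * y i t + cos (w * t) * dy)));
    [|ring].
  apply (derivable_pt_lim_plus_fun (fun s => sin (w * s) * x i s) (fun s => cos (w * s) * y i s));
    apply (derivable_pt_lim_mult_fun (fun s => _ (w * s))); auto.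
Qed.

Lemma solves_rot_newton_motion N w T x y z : solves_rot N w 0 T x y z ->
  exists VX VY VZ AX AY AZ : nat -> R -> R, forall i, (i < N)%nat -> forall t, 0 < t < T ->
    newton_motion N (rotX w x y) (rotY w x y) z VX VY VZ AX AY AZ i t.
Proof.
  intros [_ Hsol].
  set (P := fun i (p : (R -> R) * (R -> R) * (R -> R) * (R -> R) * (R -> R) * (R -> R)) =>
    let '(VX, VY, VZ, AX, AY, AZ) := p in (i < N)%nat -> forall t, 0 < t < T ->
    newton_motion N (rotX w x y) (rotY w x y) z (fun _ => VX) (fun _ => VY) (fun _ => VZ)
                  (fun _ => AX) (fun _ => AY) (fun _ => AZ) i t).
  destruct (functional_choice P) as [fam Hfam].
  { intros i. destruct (Compare_dec.lt_dec i N) as [Hi|Hi].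
    - destruct (Hsol i Hi) as (_ & _ & _ & VX & AX & VY & AY & VZ & AZ & H).
      exists (VX, VY, VZ, AX, AY, AZ). intros _ t Ht.
      destruct (H t Ht) as (h1 & h2 & h3 & h4 & h5 & h6 & h7 & h8 & h9). repeat split; auto.
    - exists ((fun _ => 0), (fun _ => 0), (fun _ => 0), (fun _ => 0), (fun _ => 0), (fun _ => 0)).
      unfold P. intros; lia. }
  exists (fun i => fst (fst (fst (fst (fst (fam i)))))), (fun i => snd (fst (fst (fst (fst (fam i)))))),
         (fun i => snd (fst (fst (fst (fam i))))), (fun i => snd (fst (fst (fam i)))),
         (fun i => snd (fst (fam i))), (fun i => snd (fam i)).
  intros i Hi t Ht. specialize (Hfam i). unfold P, newton_motion in *. cbv beta.
  destruct (fam i) as [[[[[VX VY] VZ] AX] AY] AZ]. exact (Hfam Hi t Ht).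
Qed.

(** If every height [z i] is constant, the vertical forces vanish; the
    topmost body is pulled down by every body strictly below it, so no body is
    strictly below it. *)
Lemma coplanar_of_constant_heights N T w0 x y z : 0 < T -> (1 <= N)%nat ->
  solves_rot N w0 0 T x y z ->
  (forall i, (i < N)%nat -> forall t, 0 <= t <= T -> z i t = z i 0) ->
  forall i l, (i < N)%nat -> (l < N)%nat -> forall t, 0 <= t <= T -> z i t = z l t.
Proof.
  intros HT HN Hsol Hz.
  destruct (solves_rot_newton_motion _ _ _ _ _ _ Hsol) as (VX & VY & VZ & AX & AY & AZ & Hm).
  set (t0 := T / 2). assert (Ht0 : 0 < t0 < T) by (unfold t0; lra).
  set (X := rotX w0 x y). set (Y := rotY w0 x y).
  assert (dist_gt0 : forall k l, (k < N)%nat -> (l < N)%nat -> k <> l -> 0 < dist3 X Y z k l t0 ^ 3).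
  { intros k l Hk Hl Hkl. apply pow_lt, dist3_gt0.
    apply collision_free_rot_sqr_dist_gt0 with N; auto. apply (proj1 Hsol); auto. }
  assert (F0 : forall i, (i < N)%nat -> force N X Y z z i t0 = 0).
  { intros i Hi. destruct (Hm i Hi t0 Ht0) as (_ & _ & _ & _ & h5 & h6 & _ & _ & e9).
    assert (V0 : forall s, 0 < s < T -> VZ i s = 0).
    { intros s Hs. destruct (Hm i Hi s Hs) as (_ & _ & _ & _ & k5 & _).
      apply (derivable_pt_lim_const_on (z i) T s); auto. }
    unfold X, Y. rewrite <- e9. apply (uniqueness_limite (VZ i) t0); auto.
    apply (derivable_pt_lim_locally_ext (fun _ => 0) (VZ i) t0 0 T); auto.
    - intros s Hs. rewrite V0; auto.
    - apply derivable_pt_lim_const_fun. }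
  destruct (exists_argmax N (fun l => z l t0) ltac:(lia)) as [k [Hk Hmax]].
  set (pull := fun l => if Nat.eqb l k then 0 else (z k t0 - z l t0) / dist3 X Y z k l t0 ^ 3).
  assert (Hpull : forall l, (l < N)%nat -> 0 <= pull l).
  { intros l Hl. unfold pull. destruct (Nat.eqb_spec l k); [lra|].
    apply Rdiv_le_0_compat; [specialize (Hmax l Hl); simpl in Hmax; lra|apply dist_gt0; auto]. }
  assert (Ek : forall l, (l < N)%nat -> z l t0 = z k t0).
  { intros l Hl. destruct (Nat.eq_dec l k) as [->|Hlk]; auto.
    assert (Hsum : sumN N pull = 0) by (specialize (F0 k Hk); unfold force in F0; unfold pull; lra).
    pose proof (sumN_eq0_term N pull Hpull Hsum l Hl) as Hl0. unfold pull in Hl0.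
    destruct (Nat.eqb_spec l k); [lia|].
    pose proof (dist_gt0 k l Hk Hl ltac:(auto)).
    apply Rmult_integral in Hl0. destruct Hl0 as [Hl0|Hl0]; [lra|].
    exfalso. revert Hl0. apply Rinv_neq_0_compat. lra. }
  intros i l Hi Hl t Ht. rewrite (Hz i Hi t Ht), (Hz l Hl t Ht).
  rewrite <- (Hz i Hi t0), <- (Hz l Hl t0) by lra. rewrite Ek, (Ek l); auto.
Qed.

Lemma potential_energy_conservation N T w0 x y z : 0 < T -> solves_rot N w0 0 T x y z ->
  (forall i, (i < N)%nat -> forall t, 0 <= t <= T -> z i t = z i 0) ->
  exists E0, forall t, 0 < t < T -> forall dx dy : nat -> R,
   (forall i, (i < N)%nat -> derivable_pt_lim (x i) t (dx i) /\ derivable_pt_lim (y i) t (dy i)) ->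
   U N x y z t = / 2 * sumN N (fun i => (dx i - w0 * y i t) ^ 2 + (dy i + w0 * x i t) ^ 2) - E0.
Proof.
  intros HT Hsol Hz.
  destruct (solves_rot_newton_motion _ _ _ _ _ _ Hsol) as (VX & VY & VZ & AX & AY & AZ & Hm).
  set (X := rotX w0 x y). set (Y := rotY w0 x y).
  set (E := fun s => / 2 * sumN N (fun i => VX i s ^ 2 + VY i s ^ 2 + VZ i s ^ 2) - U N X Y z s).
  assert (DE : forall t, 0 < t < T -> derivable_pt_lim E t 0).
  { intros t Ht. apply (derivable_pt_lim_energy N X Y z VX VY VZ AX AY AZ t).
    - intros i l Hi Hl Hil. apply collision_free_rot_sqr_dist_gt0 with N; auto. apply (proj1 Hsol); auto.
    - intros i Hi. apply Hm; auto. }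
  assert (CE : forall t, 0 < t < T -> E t = E (T / 2)).
  { intros t Ht. destruct (Rtotal_order t (T / 2)) as [H|[H|H]].
    - destruct (MVT_cor2 E (fun _ => 0) t (T / 2)) as [c [Hc _]]; auto; [intros c Hc; apply DE|]; lra.
    - rewrite H; auto.
    - destruct (MVT_cor2 E (fun _ => 0) (T / 2) t) as [c [Hc _]]; auto; [intros c Hc; apply DE|]; lra. }
  exists (E (T / 2)). intros t Ht dx dy Hd.
  rewrite <- (CE t Ht). unfold E. rewrite <- (U_rot N w0 x y z t). fold X Y.
  enough (sumN N (fun i => VX i t ^ 2 + VY i t ^ 2 + VZ i t ^ 2)
          = sumN N (fun i => (dx i - w0 * y i t) ^ 2 + (dy i + w0 * x i t) ^ 2)) as -> by ring.
  apply sumN_ext. intros i Hi.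
  destruct (Hm i Hi t Ht) as (h1 & _ & h3 & _ & h5 & _). destruct (Hd i Hi) as [d1 d2].
  rewrite (uniqueness_limite _ _ _ _ h1 (derivable_pt_lim_rotX w0 x y i t _ _ d1 d2)).
  rewrite (uniqueness_limite _ _ _ _ h3 (derivable_pt_lim_rotY w0 x y i t _ _ d1 d2)).
  rewrite (derivable_pt_lim_const_on (z i) T t (VZ i t)); auto. rewrite rot_sqr_norm. ring.
Qed.

(** * Hölder-1/2 approach of two colliding bodies *)

Definition kinetic_ge N (x y z : nat -> R -> R) (t c : R) : Prop :=
  forall dx dy dz : nat -> R,
    (forall i, (i < N)%nat -> derivable_pt_lim (x i) t (dx i) /\
        derivable_pt_lim (y i) t (dy i) /\ derivable_pt_lim (z i) t (dz i)) ->
    c <= sumN N (fun i => (dx i)^2 + (dy i)^2 + (dz i)^2).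

Lemma kinetic_ge_0 N x y z t : kinetic_ge N x y z t 0.
Proof.
  intros dx dy dz _. apply sumN_ge0. intros.
  pose proof (pow2_ge_0 (dx i)). pose proof (pow2_ge_0 (dy i)). pose proof (pow2_ge_0 (dz i)). lra.
Qed.

Lemma kinetic_ge_rel_velocity N (x y z X : nat -> R -> R) t i0 i1 g0 g1 c :
  X = x \/ X = y -> (i0 < N)%nat -> (i1 < N)%nat -> i0 <> i1 ->
  derivable_pt_lim (X i0) t g0 -> derivable_pt_lim (X i1) t g1 -> c <= (g0 - g1) ^ 2 ->
  kinetic_ge N x y z t (/ 2 * c).
Proof.
  intros HX Hi0 Hi1 Hne D0 D1 Hc dx dy dz Hd.
  set (k := fun i => dx i ^ 2 + dy i ^ 2 + dz i ^ 2).
  assert (Hk : forall i, (i < N)%nat -> 0 <= k i).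
  { intros i _. unfold k. pose proof (pow2_ge_0 (dx i)). pose proof (pow2_ge_0 (dy i)).
    pose proof (pow2_ge_0 (dz i)). lra. }
  pose proof (sumN_ge_pair N k i0 i1 Hk Hi0 Hi1 Hne).
  assert (g0 ^ 2 + g1 ^ 2 <= k i0 + k i1).
  { destruct (Hd i0 Hi0) as (x0 & y0 & _). destruct (Hd i1 Hi1) as (x1 & y1 & _). unfold k.
    pose proof (pow2_ge_0 (dx i0)). pose proof (pow2_ge_0 (dy i0)). pose proof (pow2_ge_0 (dz i0)).
    pose proof (pow2_ge_0 (dx i1)). pose proof (pow2_ge_0 (dy i1)). pose proof (pow2_ge_0 (dz i1)).
    destruct HX as [->| ->].
    - rewrite (uniqueness_limite _ _ _ _ D0 x0), (uniqueness_limite _ _ _ _ D1 x1). lra.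
    - rewrite (uniqueness_limite _ _ _ _ D0 y0), (uniqueness_limite _ _ _ _ D1 y1). lra. }
  pose proof (pow2_ge_0 (g0 + g1)). fold k. nra.
Qed.

Lemma increment_sqr_le T (Ge : R -> R -> Prop) v G g a b :
  lower_integral_is 0 T Ge v -> (forall t, 0 < t < T -> Ge t 0) ->
  (forall t, 0 < t < T -> derivable_pt_lim G t (g t) /\ continuity_pt g t) ->
  (forall t c, 0 < t < T -> c <= g t ^ 2 -> Ge t (/ 2 * c)) ->
  0 < a -> a < b -> b < T -> (G b - G a) ^ 2 <= 2 * v * (b - a).
Proof.
  intros Hv H0 HG Hg Ha Hab Hb.
  assert (Cg2 : forall t, a <= t <= b -> continuity_pt (fun t => g t ^ 2) t).
  { intros t Ht. apply (continuity_pt_ext (g * g)%F); [intros; unfold mult_fct; ring|].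
    apply continuity_pt_mult; apply HG; lra. }
  set (pr := continuity_implies_RiemannInt (Rlt_le _ _ Hab) Cg2).
  assert (RiemannInt pr <= 2 * v).
  { apply (RiemannInt_le_lower_integral T a b v Ge); auto; lra. }
  assert ((G b - G a) ^ 2 <= (b - a) * RiemannInt pr).
  { apply RiemannInt_sqr_ge; auto; intros t Ht; apply HG; lra. }
  nra.
Qed.

Lemma cont_on_near0 T g1 g2 : 0 <= T -> cont_on 0 T g1 -> cont_on 0 T g2 -> g1 0 = g2 0 ->
  forall e, 0 < e -> exists d, 0 < d /\ forall a, 0 <= a <= T -> a < d -> Rabs (g1 a - g2 a) < e.
Proof.
  intros HT C1 C2 E e He.
  destruct (C1 0 ltac:(lra) (e / 2)) as [d1 [Hd1 D1]]; [lra|].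
  destruct (C2 0 ltac:(lra) (e / 2)) as [d2 [Hd2 D2]]; [lra|].
  exists (Rmin d1 d2). split; [apply Rmin_pos; auto|]. intros a Ha Had.
  assert (Ra : Rabs (a - 0) = a) by (rewrite Rminus_0_r; apply Rabs_right; lra).
  pose proof (Rmin_l d1 d2). pose proof (Rmin_r d1 d2).
  specialize (D1 a Ha ltac:(lra)). specialize (D2 a Ha ltac:(lra)).
  replace (g1 a - g2 a) with ((g1 a - g1 0) - (g2 a - g2 0)) by (rewrite E; ring).
  eapply Rle_lt_trans; [apply Rabs_triang|]. rewrite Rabs_Ropp. lra.
Qed.

Lemma cluster_horizontal_approach N T (x y z : nat -> R -> R) w0 i0 i1 :
  0 < T -> H1_path N T x y z -> solves_rot N w0 0 T x y z ->
  (i0 < N)%nat -> (i1 < N)%nat -> i0 <> i1 -> x i0 0 = x i1 0 -> y i0 0 = y i1 0 ->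
  exists K, 0 < K /\ forall eps, 0 < eps -> forall t, 0 < t < T -> t <= eps ^ 2 / K ->
    (x i0 t - x i1 t) ^ 2 + (y i0 t - y i1 t) ^ 2 <= eps ^ 2.
Proof.
  intros HT [Hc [v Hv]] [_ Hsol] Hi0 Hi1 Hne Ex Ey. fold (kinetic_ge N x y z) in Hv.
  assert (v0 : 0 <= v) by (apply (lower_integral_ge0 T (kinetic_ge N x y z)); auto using kinetic_ge_0; lra).
  assert (Hincr : forall X, X = x \/ X = y -> forall a b, 0 < a -> a < b -> b < T ->
            (X i0 b - X i1 b - (X i0 a - X i1 a)) ^ 2 <= 2 * v * (b - a)).
  { intros X HX a b Ha Hab Hb.
    assert (C : forall i, (i < N)%nat -> C2on 0 T (X i))
      by (intros i Hi; destruct (Hsol i Hi) as (cx & cy & _); destruct HX as [->| ->]; auto).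
    destruct (C i0 Hi0) as [g0 [g0' H0]]. destruct (C i1 Hi1) as [g1 [g1' H1]].
    apply (increment_sqr_le T (kinetic_ge N x y z) v (fun s => X i0 s - X i1 s) (fun s => g0 s - g1 s));
      auto using kinetic_ge_0.
    - intros t Ht. destruct (H0 t Ht) as (d0 & dd0 & _). destruct (H1 t Ht) as (d1 & dd1 & _).
      split; [apply derivable_pt_lim_minus_fun; auto|].
      apply (continuity_pt_ext (g0 - g1)%F); [reflexivity|].
      apply continuity_pt_minus; apply derivable_continuous_pt; eexists; eauto.
    - intros t c Ht Hct. apply (kinetic_ge_rel_velocity N x y z X t i0 i1 (g0 t) (g1 t)); auto;
        [apply H0|apply H1]; auto. }
  exists (32 * v + 1). split; [lra|]. intros eps He t Ht Hte.
  destruct (Hc i0 Hi0) as (cx0 & cy0 & _). destruct (Hc i1 Hi1) as (cx1 & cy1 & _).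
  destruct (cont_on_near0 T _ _ ltac:(lra) cx0 cx1 Ex (eps / 4)) as [dx [Hdx Dx]]; [lra|].
  destruct (cont_on_near0 T _ _ ltac:(lra) cy0 cy1 Ey (eps / 4)) as [dy [Hdy Dy]]; [lra|].
  set (a := Rmin t (Rmin dx dy) / 2).
  assert (Ha : 0 < a < t /\ a < dx /\ a < dy).
  { unfold a. pose proof (Rmin_l t (Rmin dx dy)). pose proof (Rmin_r t (Rmin dx dy)).
    pose proof (Rmin_l dx dy). pose proof (Rmin_r dx dy).
    assert (0 < Rmin t (Rmin dx dy)) by (repeat apply Rmin_pos; lra). lra. }
  specialize (Dx a ltac:(lra) ltac:(lra)). specialize (Dy a ltac:(lra) ltac:(lra)).
  apply Rabs_lt_between in Dx. apply Rabs_lt_between in Dy.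
  pose proof (Hincr x ltac:(auto) a t ltac:(lra) ltac:(lra) ltac:(lra)) as Ix.
  pose proof (Hincr y ltac:(auto) a t ltac:(lra) ltac:(lra) ltac:(lra)) as Iy.
  assert (Bt : 8 * v * t <= eps ^ 2 / 4).
  { assert (t * (32 * v + 1) <= eps ^ 2); [|nra].
    apply (Rmult_le_reg_r (/ (32 * v + 1))); [apply Rinv_0_lt_compat; lra|].
    rewrite Rmult_assoc, Rinv_r by lra. unfold Rdiv in Hte. lra. }
  set (ux := x i0 t - x i1 t - (x i0 a - x i1 a)). set (uy := y i0 t - y i1 t - (y i0 a - y i1 a)).
  fold ux in Ix. fold uy in Iy.
  replace (x i0 t - x i1 t) with (ux + (x i0 a - x i1 a)) by (unfold ux; ring).
  replace (y i0 t - y i1 t) with (uy + (y i0 a - y i1 a)) by (unfold uy; ring).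
  pose proof (pow2_ge_0 (ux - (x i0 a - x i1 a))). pose proof (pow2_ge_0 (uy - (y i0 a - y i1 a))).
  nra.
Qed.

(** * Potential of a planar configuration shifted vertically *)

Lemma U_ge0 N x y z t : 0 <= U N x y z t.
Proof.
  unfold U. apply sumN_ge0; intros; apply sumN_ge0; intros.
  unfold Rdiv. rewrite Rmult_1_l. destruct (Req_dec (dist3 x y z i i0 t) 0) as [->|Hn].
  - rewrite Rinv_0. lra.
  - apply Rlt_le, Rinv_0_lt_compat. unfold dist3 in *. pose proof (sqrt_pos
      ((x i t - x i0 t) ^ 2 + (y i t - y i0 t) ^ 2 + (z i t - z i0 t) ^ 2)). lra.
Qed.

Lemma U_sub N x y z zp t : U N x y z t - U N x y zp t =
  sumN N (fun i => sumN i (fun l => 1 / dist3 x y z i l t - 1 / dist3 x y zp i l t)).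
Proof.
  unfold U, Rminus. rewrite <- sumN_opp, <- sumN_add. apply sumN_ext. intros i Hi.
  rewrite <- sumN_opp, <- sumN_add. reflexivity.
Qed.

(** Two bodies at horizontal distance [<= eps] and vertical distance [>= eps]
    lose at least [1/(4 eps)] of mutual potential compared to the same bodies
    at the same height. *)
Lemma inv_sqrt_gap_ge A B eps : 0 < eps -> 0 < A -> A <= eps ^ 2 -> eps ^ 2 <= B ->
  / (4 * eps) <= 1 / sqrt A - 1 / sqrt (A + B).
Proof.
  intros He HA HAe HB.
  set (r := sqrt A). set (p := sqrt (A + B)).
  assert (Hr : 0 < r) by (apply sqrt_lt_R0; auto).
  assert (Hr2 : r ^ 2 = A) by (unfold r; simpl; rewrite Rmult_1_r; apply sqrt_sqrt; lra).
  assert (Hp2 : p ^ 2 = A + B) by (unfold p; simpl; rewrite Rmult_1_r; apply sqrt_sqrt; lra).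
  assert (Hp : 0 <= p) by apply sqrt_pos.
  assert (Hre : r <= eps) by nra.
  assert (Hpr : 4 * r <= 3 * p) by nra.
  apply Rle_trans with (/ (4 * r)); [apply Rinv_le_contravar; lra|].
  replace (1 / r - 1 / p) with ((p - r) / (r * p)) by (field; lra).
  apply (Rmult_le_reg_r (4 * r * p)); [nra|].
  replace (/ (4 * r) * (4 * r * p)) with p by (field; lra).
  replace ((p - r) / (r * p) * (4 * r * p)) with (4 * (p - r)) by (field; lra). lra.
Qed.

Section VerticalShift.

Variables (N : nat) (x y z zp : nat -> R -> R) (h : nat -> R) (t : R).
Hypothesis same_height : forall i l, (i < N)%nat -> (l < N)%nat -> z i t = z l t.
Hypothesis shift : forall i, zp i t = z i t + h i.
Hypothesis no_collision : collision_free N x y z t.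

Lemma inv_dist3_shift_le i l : (l < i)%nat -> (i < N)%nat ->
  0 <= 1 / dist3 x y z i l t - 1 / dist3 x y zp i l t.
Proof.
  intros Hli HiN.
  assert (Hd : 0 < dist3 x y z i l t)
    by (apply dist3_gt0, collision_free_sqr_dist_gt0 with N; auto; lia).
  assert (dist3 x y z i l t <= dist3 x y zp i l t).
  { unfold dist3. apply sqrt_le_1_alt. rewrite !shift, (same_height i l) by lia.
    pose proof (pow2_ge_0 (z l t + h i - (z l t + h l))). lra. }
  assert (1 / dist3 x y zp i l t <= 1 / dist3 x y z i l t).
  { unfold Rdiv. rewrite !Rmult_1_l. apply Rinv_le_contravar; auto. }
  lra.
Qed.

Lemma U_shift_le : U N x y zp t <= U N x y z t.
Proof.
  enough (0 <= U N x y z t - U N x y zp t) by lra. rewrite U_sub.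
  apply sumN_ge0. intros i Hi. apply sumN_ge0. intros l Hl. apply inv_dist3_shift_le; lia.
Qed.

Lemma U_shift_gain j k eps : (k < j)%nat -> (j < N)%nat -> 0 < eps ->
  (x j t - x k t) ^ 2 + (y j t - y k t) ^ 2 <= eps ^ 2 -> eps ^ 2 <= (h j - h k) ^ 2 ->
  U N x y zp t + / (4 * eps) <= U N x y z t.
Proof.
  intros Hkj HjN He HA HB.
  enough (/ (4 * eps) <= U N x y z t - U N x y zp t) by lra.
  rewrite U_sub. apply Rle_trans with (1 / dist3 x y z j k t - 1 / dist3 x y zp j k t).
  - assert (P := collision_free_sqr_dist_gt0 N x y z t j k no_collision HjN ltac:(lia) ltac:(lia)).
    unfold dist3 in *. rewrite !shift, (same_height j k) in * by lia.
    replace (z k t - z k t) with 0 in * by ring.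
    replace (z k t + h j - (z k t + h k)) with (h j - h k) by ring.
    replace ((x j t - x k t) ^ 2 + (y j t - y k t) ^ 2 + 0 ^ 2)
      with ((x j t - x k t) ^ 2 + (y j t - y k t) ^ 2) in * by ring.
    apply inv_sqrt_gap_ge; auto.
  - apply (sumN_triangle_ge_term N (fun i l => 1 / dist3 x y z i l t - 1 / dist3 x y zp i l t)); auto.
    intros i l Hli HiN. apply inv_dist3_shift_le; auto.
Qed.

Lemma U_shift_gain_window i0 i1 eps s1 s2 : (i0 < N)%nat -> (i1 < N)%nat -> i0 <> i1 -> 0 < eps ->
  (s1 <= t <= s2 -> (x i0 t - x i1 t) ^ 2 + (y i0 t - y i1 t) ^ 2 <= eps ^ 2 /\
                    eps ^ 2 <= (h i0 - h i1) ^ 2) ->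
  U N x y zp t + / (4 * eps) * indicator s1 s2 t <= U N x y z t.
Proof.
  intros Hi0 Hi1 Hne He Hwin. pose proof U_shift_le.
  unfold indicator. destruct (Rle_dec s1 t); [destruct (Rle_dec t s2)|]; try lra.
  destruct (Hwin ltac:(lra)) as [Hx Hh]. rewrite Rmult_1_r.
  destruct (Nat.lt_ge_cases i1 i0).
  - apply (U_shift_gain i0 i1); auto.
  - apply (U_shift_gain i1 i0 eps); [lia|auto|auto| |].
    + replace ((x i1 t - x i0 t) ^ 2 + (y i1 t - y i0 t) ^ 2)
        with ((x i0 t - x i1 t) ^ 2 + (y i0 t - y i1 t) ^ 2) by ring. exact Hx.
    + replace ((h i1 - h i0) ^ 2) with ((h i0 - h i1) ^ 2) by ring. exact Hh.
Qed.

End VerticalShift.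

Lemma Lag_ge_0 N w x y z t : Lag_ge N w x y z t 0.
Proof.
  right. intros dx dy dz _. pose proof (U_ge0 N x y z t).
  assert (0 <= sumN N (fun i => (dx i - w * y i t) ^ 2 + (dy i + w * x i t) ^ 2 + dz i ^ 2)); [|lra].
  apply sumN_ge0. intros.
  pose proof (pow2_ge_0 (dx i - w * y i t)). pose proof (pow2_ge_0 (dy i + w * x i t)).
  pose proof (pow2_ge_0 (dz i)). lra.
Qed.

Lemma rot_kinetic_le N w (x y : nat -> R -> R) (dx dy : nat -> R) t :
  / 2 * sumN N (fun i => (dx i - w * y i t) ^ 2 + (dy i + w * x i t) ^ 2) <=
  sumN N (fun i => dx i ^ 2 + dy i ^ 2) + w ^ 2 * sumN N (fun i => x i t ^ 2 + y i t ^ 2).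
Proof.
  rewrite <- !sumN_scal, <- !sumN_add. apply sumN_le. intros i Hi.
  pose proof (pow2_ge_0 (dx i + w * y i t)). pose proof (pow2_ge_0 (dy i - w * x i t)). nra.
Qed.

Section ActionComparison.

Variables (N : nat) (T w : R) (x y z zp e : nat -> R -> R).
Variables (v B Cst c1 gam s1 s2 d1 d2 : R).

Hypothesis gain_window : 0 <= s1 <= s2 /\ s2 <= T.
Hypothesis cost_window : 0 <= d1 <= d2 /\ d2 <= T.
Hypothesis c1_ge0 : 0 <= c1.
Hypothesis gam_ge0 : 0 <= gam.
Hypothesis kinetic_finite : lower_integral_is 0 T (kinetic_ge N x y z) v.
Hypothesis zp_collision_free : forall t, 0 < t < T -> collision_free N x y zp t.
Hypothesis z_flat : forall t i d, 0 < t < T -> (i < N)%nat -> derivable_pt_lim (z i) t d -> d = 0.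
Hypothesis zp_deriv : forall t i d, 0 < t < T -> (i < N)%nat ->
  derivable_pt_lim (z i) t d -> derivable_pt_lim (zp i) t (d + e i t).
Hypothesis cost : forall t, 0 < t < T -> / 2 * sumN N (fun i => e i t ^ 2) <= c1 * indicator d1 d2 t.
Hypothesis gain : forall t, 0 < t < T -> U N x y zp t + gam * indicator s1 s2 t <= U N x y z t.
Hypothesis energy : forall t (dx dy : nat -> R), 0 < t < T ->
  (forall i, (i < N)%nat -> derivable_pt_lim (x i) t (dx i) /\ derivable_pt_lim (y i) t (dy i)) ->
  U N x y z t <= sumN N (fun i => dx i ^ 2 + dy i ^ 2) + Cst.
Hypothesis positions_bounded : forall t, 0 <= t <= T -> sumN N (fun i => x i t ^ 2 + y i t ^ 2) <= B.
Hypothesis gain_exceeds_cost : 0 < gam * (s2 - s1) - c1 * (d2 - d1).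

Lemma Lag_ge_shift_le t c dx dy dz : 0 < t < T -> Lag_ge N w x y zp t c ->
  (forall i, (i < N)%nat -> derivable_pt_lim (x i) t (dx i) /\
     derivable_pt_lim (y i) t (dy i) /\ derivable_pt_lim (z i) t (dz i)) ->
  (forall i, (i < N)%nat -> dz i = 0) /\
  c <= / 2 * sumN N (fun i => (dx i - w * y i t) ^ 2 + (dy i + w * x i t) ^ 2 + (dz i + e i t) ^ 2)
       + U N x y zp t.
Proof.
  intros Ht [Hc|HL] Hd; [exfalso; apply Hc; auto|].
  split; [intros i Hi; apply (z_flat t i); auto; apply Hd; auto|].
  apply (HL dx dy (fun i => dz i + e i t)). intros i Hi.
  destruct (Hd i Hi) as (h1 & h2 & h3). repeat split; auto.
Qed.

(** Via energy conservation the Lagrangian of [zp] is dominated by the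
    kinetic energy of [q] plus a constant. *)
Lemma Lag_ge_shift_kinetic t c : 0 < t < T -> Lag_ge N w x y zp t c ->
  kinetic_ge N x y z t (/ 2 * c + - / 2 * (w ^ 2 * B + c1 + Cst)).
Proof.
  intros Ht HL dx dy dz Hd.
  destruct (Lag_ge_shift_le t c dx dy dz Ht HL Hd) as [Hz0 Hc].
  assert (Hsplit : / 2 * sumN N (fun i => (dx i - w * y i t) ^ 2 + (dy i + w * x i t) ^ 2 + (dz i + e i t) ^ 2)
    = / 2 * sumN N (fun i => (dx i - w * y i t) ^ 2 + (dy i + w * x i t) ^ 2) + / 2 * sumN N (fun i => e i t ^ 2)).
  { rewrite <- Rmult_plus_distr_l, <- sumN_add. f_equal. apply sumN_ext. intros i Hi. rewrite Hz0 by auto. ring. }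
  pose proof (rot_kinetic_le N w x y dx dy t).
  pose proof (energy t dx dy Ht ltac:(intros i Hi; destruct (Hd i Hi) as (? & ? & ?); auto)).
  pose proof (gain t Ht). pose proof (cost t Ht). pose proof (positions_bounded t ltac:(lra)).
  pose proof (indicator_bounds s1 s2 t). pose proof (indicator_bounds d1 d2 t).
  assert (sumN N (fun i => dx i ^ 2 + dy i ^ 2) <= sumN N (fun i => dx i ^ 2 + dy i ^ 2 + dz i ^ 2))
    by (apply sumN_le; intros; pose proof (pow2_ge_0 (dz i)); lra).
  assert (w ^ 2 * sumN N (fun i => x i t ^ 2 + y i t ^ 2) <= w ^ 2 * B)
    by (apply Rmult_le_compat_l; auto; apply pow2_ge_0).
  assert (0 <= gam * indicator s1 s2 t) by (apply Rmult_le_pos; lra).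
  assert (c1 * indicator d1 d2 t <= c1) by nra.
  lra.
Qed.

Lemma Lag_ge_of_shift t c : 0 < t < T -> Lag_ge N w x y zp t c ->
  Lag_ge N w x y z t (c - c1 * indicator d1 d2 t + gam * indicator s1 s2 t).
Proof.
  intros Ht HL. right. intros dx dy dz Hd.
  destruct (Lag_ge_shift_le t c dx dy dz Ht HL Hd) as [Hz0 Hc].
  rewrite (sumN_ext N _ (fun i => ((dx i - w * y i t) ^ 2 + (dy i + w * x i t) ^ 2 + dz i ^ 2) + e i t ^ 2))
    in Hc by (intros i Hi; rewrite Hz0 by auto; ring).
  rewrite sumN_add in Hc.
  pose proof (cost t Ht). pose proof (gain t Ht). lra.
Qed.

Lemma action_lt_of_shift : action_lt N w T x y zp x y z.
Proof.
  destruct kinetic_finite as [Hvub _].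
  set (Cb := w ^ 2 * B + c1 + Cst).
  set (Sp := fun r => exists phi : StepFun 0 T,
               (forall t, 0 < t < T -> Lag_ge N w x y zp t (phi t)) /\ r = RiemannInt_SF phi).
  assert (Bnd : forall r, Sp r -> r <= 2 * v + Cb * T).
  { intros r [phi [Hphi ->]].
    destruct (StepFun_lincomb 0 T phi (mkStepFun (StepFun_P4 0 T 1)) (/ 2) (- / 2 * Cb)) as [h [Hh Hhi]].
    assert (RiemannInt_SF h <= v).
    { apply Hvub. exists h. split; auto. intros t Ht. rewrite Hh. cbn [fe]. unfold fct_cte.
      replace (/ 2 * phi t + - / 2 * Cb * 1) with (/ 2 * phi t + - / 2 * Cb) by ring.
      apply Lag_ge_shift_kinetic; auto. }
    rewrite Hhi, StepFun_P18 in H. lra. }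
  destruct (completeness Sp) as [a Ha].
  { exists (2 * v + Cb * T). intros r Hr. apply Bnd; auto. }
  { exists (RiemannInt_SF (mkStepFun (StepFun_P4 0 T 0))), (mkStepFun (StepFun_P4 0 T 0)).
    split; auto. intros t Ht. apply Lag_ge_0. }
  exists a. split; [exact Ha|]. intros b [Hbub _].
  set (delta := gam * (s2 - s1) - c1 * (d2 - d1)).
  enough (a <= b - delta) by (unfold delta in *; lra).
  apply (proj2 Ha). intros r [phi [Hphi ->]].
  destruct (StepFun_indicator 0 T d1 d2) as [X1 [HX1 HX1i]]; try lra.
  destruct (StepFun_indicator 0 T s1 s2) as [X2 [HX2 HX2i]]; try lra.
  destruct (StepFun_lincomb 0 T phi X1 1 (- c1)) as [h1 [Hh1 Hh1i]].
  destruct (StepFun_lincomb 0 T h1 X2 1 gam) as [h2 [Hh2 Hh2i]].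
  assert (RiemannInt_SF h2 <= b).
  { apply Hbub. exists h2. split; auto. intros t Ht.
    rewrite Hh2, Hh1, HX1, HX2.
    replace (1 * (1 * phi t + - c1 * indicator d1 d2 t) + gam * indicator s1 s2 t)
      with (phi t - c1 * indicator d1 d2 t + gam * indicator s1 s2 t) by ring.
    apply Lag_ge_of_shift; auto. }
  rewrite Hh2i, Hh1i, HX1i, HX2i in H. unfold delta. lra.
Qed.

End ActionComparison.

Lemma cutoff_profile d1 L T : 0 < d1 -> 0 < L -> d1 + L < T ->
  cont_on 0 T (cutoff d1 L) /\
  (forall t, t <> d1 -> t <> d1 + L ->
     derivable_pt_lim (cutoff d1 L) t (cutoff' d1 L t) /\ continuity_pt (cutoff' d1 L) t) /\
  (exists v, lower_integral_is 0 T (fun t c => c <= (cutoff' d1 L t) ^ 2) v) /\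
  (forall t, 0 <= t <= d1 -> cutoff d1 L t = 1) /\
  (forall t, d1 + L <= t <= T -> cutoff d1 L t = 0) /\
  (forall s t, d1 <= s -> s < t -> t <= d1 + L -> cutoff d1 L t < cutoff d1 L s).
Proof.
  intros Hd1 HL HT. repeat split.
  - apply (cont_on_of_derivable _ (cutoff' d1 L)). intros t. apply derivable_pt_lim_cutoff; auto.
  - apply derivable_pt_lim_cutoff; auto.
  - apply continuity_pt_cutoff'; auto.
  - apply cutoff'_energy_finite; lra.
  - intros t Ht. apply cutoff_one. lra.
  - intros t Ht. apply cutoff_zero; lra.
  - intros s t Hs Hst Ht. apply cutoff_decreasing; lra.
Qed.

Lemma sign_sqr_le1 (a : R) : a = 0 \/ a = 1 \/ a = -1 -> a ^ 2 <= 1.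
Proof. intros [-> | [-> | ->]]; lra. Qed.

Lemma sign_diff_sqr_ge1 (a b : R) : a = 0 \/ a = 1 \/ a = -1 -> b = 0 \/ b = 1 \/ b = -1 ->
  a <> b -> 1 <= (a - b) ^ 2.
Proof. intros [-> | [-> | ->]] [-> | [-> | ->]] Hab; lra. Qed.

Lemma cutoff_shift_cost N tau eps d1 L t : 0 < L -> (forall i, (i < N)%nat -> tau i ^ 2 <= 1) ->
  / 2 * sumN N (fun i => (eps * cutoff' d1 L t * tau i) ^ 2)
  <= / 2 * eps ^ 2 * INR N * (9 / (4 * L ^ 2)) * indicator d1 (d1 + L) t.
Proof.
  intros HL Htau.
  assert (sumN N (fun i => (eps * cutoff' d1 L t * tau i) ^ 2) <= eps ^ 2 * cutoff' d1 L t ^ 2 * INR N).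
  { rewrite <- sumN_1, <- sumN_scal. apply sumN_le. intros i Hi.
    specialize (Htau i Hi). pose proof (pow2_ge_0 (eps * cutoff' d1 L t)).
    replace ((eps * cutoff' d1 L t * tau i) ^ 2) with ((eps * cutoff' d1 L t) ^ 2 * tau i ^ 2) by ring.
    replace (eps ^ 2 * cutoff' d1 L t ^ 2 * 1) with ((eps * cutoff' d1 L t) ^ 2) by ring. nra. }
  pose proof (cutoff'_sqr_le d1 L t HL). pose proof (pos_INR N). pose proof (pow2_ge_0 eps).
  assert (0 <= eps ^ 2 * INR N) by (apply Rmult_le_pos; auto).
  nra.
Qed.

(** With [d1 = eps^2 / K] and [L = T / 2], the potential gain [eps / (8 K)]
    dominates the kinetic cost [9 N eps^2 / (4 T)] once [18 N K eps < T]. *)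
Lemma window_gain_exceeds_cost N K T eps : (1 <= N)%nat -> 0 < K -> 0 < T -> 0 < eps ->
  eps * (18 * INR N * K) < T ->
  0 < / (4 * eps) * (eps ^ 2 / K - eps ^ 2 / K / 2)
      - / 2 * eps ^ 2 * INR N * (9 / (4 * (T / 2) ^ 2)) * (eps ^ 2 / K + T / 2 - eps ^ 2 / K).
Proof.
  intros HN HK HT He Hsmall.
  assert (HNpos : 0 < INR N) by (apply lt_0_INR; lia).
  replace (/ (4 * eps) * (eps ^ 2 / K - eps ^ 2 / K / 2)) with (eps / (8 * K)) by (field; lra).
  replace (/ 2 * eps ^ 2 * INR N * (9 / (4 * (T / 2) ^ 2)) * (eps ^ 2 / K + T / 2 - eps ^ 2 / K))
    with (9 * INR N * eps ^ 2 / (4 * T)) by (field; lra).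
  enough (9 * INR N * eps ^ 2 / (4 * T) < eps / (8 * K)) by lra.
  apply (Rmult_lt_reg_r (8 * K * T)); [nra|].
  replace (9 * INR N * eps ^ 2 / (4 * T) * (8 * K * T)) with (eps * (eps * (18 * INR N * K))) by (field; lra).
  replace (eps / (8 * K) * (8 * K * T)) with (eps * T) by (field; lra).
  apply Rmult_lt_compat_l; auto.
Qed.

Lemma exists_small_eps a b : 0 < a -> 0 < b ->
  exists eps0, eps0 > 0 /\ forall eps, 0 < eps < eps0 -> eps < 1 /\ eps < a /\ eps < b.
Proof.
  intros Ha Hb. exists (Rmin 1 (Rmin a b)). split; [repeat apply Rmin_pos; lra|].
  intros eps He. pose proof (Rmin_l 1 (Rmin a b)). pose proof (Rmin_r 1 (Rmin a b)).
  pose proof (Rmin_l a b). pose proof (Rmin_r a b). lra.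
Qed.

Section VerticalKick.

Variables (N : nat) (T w0 : R) (x y z : nat -> R -> R) (tau : nat -> R) (i0 i1 : nat).
Variables (K v B E0 eps : R).

Hypothesis HN : (1 <= N)%nat.
Hypothesis HT : 0 < T.
Hypothesis Hsol : solves_rot N w0 0 T x y z.
Hypothesis Hz : forall i, (i < N)%nat -> forall t, 0 <= t <= T -> z i t = z i 0.
Hypothesis Hflat : forall i l, (i < N)%nat -> (l < N)%nat -> forall t, 0 <= t <= T -> z i t = z l t.
Hypothesis Htau : forall i, (i < N)%nat -> tau i = 0 \/ tau i = 1 \/ tau i = -1.
Hypotheses (Hi0 : (i0 < N)%nat) (Hi1 : (i1 < N)%nat) (Hne : i0 <> i1) (Htd : tau i0 <> tau i1).
Hypothesis HK : 0 < K.
Hypothesis Hnear : forall eps, 0 < eps -> forall t, 0 < t < T -> t <= eps ^ 2 / K ->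
  (x i0 t - x i1 t) ^ 2 + (y i0 t - y i1 t) ^ 2 <= eps ^ 2.
Hypothesis Hv : lower_integral_is 0 T (kinetic_ge N x y z) v.
Hypothesis HE0 : forall t, 0 < t < T -> forall dx dy : nat -> R,
  (forall i, (i < N)%nat -> derivable_pt_lim (x i) t (dx i) /\ derivable_pt_lim (y i) t (dy i)) ->
  U N x y z t = / 2 * sumN N (fun i => (dx i - w0 * y i t) ^ 2 + (dy i + w0 * x i t) ^ 2) - E0.
Hypothesis HB : forall t, 0 <= t <= T -> sumN N (fun i => x i t ^ 2 + y i t ^ 2) <= B.
Hypothesis He : 0 < eps.
Hypothesis Hd1 : eps ^ 2 / K < T / 2.
Hypothesis Hsmall : eps * (18 * INR N * K) < T.

Lemma vertical_kick_action_lt w :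
  action_lt N w T x y (fun i t => z i t + eps * cutoff (eps ^ 2 / K) (T / 2) t * tau i) x y z.
Proof.
  set (d1 := eps ^ 2 / K).
  assert (Hd1pos : 0 < d1 < T / 2) by (split; [apply Rdiv_lt_0_compat; nra|exact Hd1]).
  assert (HNpos : 0 < INR N) by (apply lt_0_INR; lia).
  apply (action_lt_of_shift N T w x y z _ (fun i t => eps * cutoff' d1 (T / 2) t * tau i) v B (w0 ^ 2 * B - E0)
           (/ 2 * eps ^ 2 * INR N * (9 / (4 * (T / 2) ^ 2))) (/ (4 * eps)) (d1 / 2) d1 d1 (d1 + T / 2));
    try (repeat split; lra).
  - pose proof (pow2_ge_0 eps). apply Rmult_le_pos; [nra|apply Rlt_le, Rdiv_lt_0_compat; nra].
  - apply Rlt_le, Rinv_0_lt_compat. lra.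
  - exact Hv.
  - intros t Ht i l Hi Hl Hil (hx & hy & _). apply (proj1 Hsol t Ht i l Hi Hl Hil).
    repeat split; auto. apply Hflat; auto; lra.
  - intros t i d Ht Hi. apply (derivable_pt_lim_const_on (z i) T t); auto.
  - intros t i d Ht Hi Hd. apply derivable_pt_lim_plus_fun; auto.
    apply (derivable_pt_lim_scal_right (fun s => eps * cutoff d1 (T / 2) s)).
    apply derivable_pt_lim_scal_fun, derivable_pt_lim_cutoff. lra.
  - intros t Ht. apply cutoff_shift_cost; [lra|]. intros i Hi. apply sign_sqr_le1; auto.
  - intros t Ht.
    apply (U_shift_gain_window N x y z _ (fun i => eps * cutoff d1 (T / 2) t * tau i) t
             (fun i l Hi Hl => Hflat i l Hi Hl t ltac:(lra)) (fun i => eq_refl) (proj1 Hsol t Ht) i0 i1);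
      auto.
    intros Hwin. split; [apply Hnear; unfold d1 in *; lra|].
    rewrite cutoff_one by lra.
    pose proof (sign_diff_sqr_ge1 (tau i0) (tau i1) (Htau i0 Hi0) (Htau i1 Hi1) Htd).
    pose proof (pow2_ge_0 eps). nra.
  - intros t dx dy Ht Hd. rewrite (HE0 t Ht dx dy Hd).
    pose proof (rot_kinetic_le N w0 x y dx dy t). pose proof (HB t ltac:(lra)).
    pose proof (pow2_ge_0 w0). nra.
  - exact HB.
  - unfold d1. apply (window_gain_exceeds_cost N K T eps); auto.
Qed.

End VerticalKick.

Theorem lemma3p3 (N : nat) (HN : (2 <= N)%nat) (T : R) (HT : 0 < T)
  (x y z : nat -> R -> R) (w0 : R) (I : nat -> Prop) (tau : nat -> R) :
  H1_path N T x y z ->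
  solves_rot N w0 0 T x y z ->
  (forall i, I i -> (i < N)%nat) ->
  (exists i j, I i /\ I j /\ i <> j) ->
  cluster_collision N I x y z 0 ->
  (forall i, (i < N)%nat -> forall t, 0 <= t <= T -> z i t = z i 0) ->
  (forall i, (i < N)%nat -> tau i = 0 \/ tau i = 1 \/ tau i = -1) ->
  (exists i0 i1, I i0 /\ I i1 /\ i0 <> i1 /\ tau i0 <> tau i1) ->
  (forall i, (i < N)%nat -> ~ I i -> tau i = 0) ->
  exists eps0, eps0 > 0 /\
  forall eps, 0 < eps < eps0 ->
  exists (d1 d2 : R) (f fd : R -> R),
    0 < d1 /\ d1 < d2 /\ d2 < T /\
    (* f in H^1([0,T]): continuous, C^1 off {d1,d2}, finite Dirichlet energy *)
    cont_on 0 T f /\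
    (forall t, t <> d1 -> t <> d2 -> derivable_pt_lim f t (fd t) /\ continuity_pt fd t) /\
    (exists v, lower_integral_is 0 T (fun t c => c <= (fd t)^2) v) /\
    (forall t, 0 <= t <= d1 -> f t = 1) /\
    (forall t, d2 <= t <= T -> f t = 0) /\
    (forall s t, d1 <= s -> s < t -> t <= d2 -> f t < f s) /\
    forall w : R,
      action_lt N w T x y (fun i t => z i t + eps * f t * tau i) x y z.
Proof.
  intros H1 Hsol HI _ [Hco _] Hz Htau (i0 & i1 & I0 & I1 & Hne & Htd) _.
  pose proof (HI i0 I0) as Hi0. pose proof (HI i1 I1) as Hi1.
  destruct (Hco i0 i1 I0 I1) as (Ex & Ey & _).
  pose proof (coplanar_of_constant_heights N T w0 x y z HT ltac:(lia) Hsol Hz) as Hflat.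
  destruct (cluster_horizontal_approach N T x y z w0 i0 i1 HT H1 Hsol Hi0 Hi1 Hne Ex Ey) as [K [HK Hnear]].
  destruct (potential_energy_conservation N T w0 x y z HT Hsol Hz) as [E0 HE0].
  destruct H1 as [Hc [v Hv]].
  destruct (cont_on_sumN_sqr_bounded N T x y ltac:(lra)) as [B HB];
    [intros i Hi; destruct (Hc i Hi) as (? & ? & _); auto|].
  assert (HNK : 0 < 18 * INR N * K) by (pose proof (lt_0_INR N ltac:(lia)); nra).
  destruct (exists_small_eps (K * T / 2) (T / (18 * INR N * K))) as [eps0 [Heps0 Hsmall]];
    [nra|apply Rdiv_lt_0_compat; nra|].
  exists eps0. split; auto. intros eps Heps. destruct (Hsmall eps Heps) as (He1 & He2 & He3).
  assert (Hd1 : 0 < eps ^ 2 / K < T / 2).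
  { split; [apply Rdiv_lt_0_compat; nra|]. apply (Rmult_lt_reg_r K); auto. field_simplify; nra. }
  assert (Hsmall' : eps * (18 * INR N * K) < T).
  { apply (Rmult_lt_reg_r (/ (18 * INR N * K))); [apply Rinv_0_lt_compat; nra|].
    rewrite Rmult_assoc, Rinv_r by nra. lra. }
  exists (eps ^ 2 / K), (eps ^ 2 / K + T / 2), (cutoff (eps ^ 2 / K) (T / 2)), (cutoff' (eps ^ 2 / K) (T / 2)).
  do 3 (split; [lra|]).
  destruct (cutoff_profile (eps ^ 2 / K) (T / 2) T) as (P1 & P2 & P3 & P4 & P5 & P6); try lra.
  do 6 (split; [assumption|]).
  intros w. apply (vertical_kick_action_lt N T w0 x y z tau i0 i1 K v B E0 eps); auto; try lia; lra.
Qed.
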